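(* The class of ph-homogeneous partial cubes is closed under convex subgraphs, gated amalgams, and finite Cartesian products as well as (weak) Cartesian products of infinite families.
   Context: Graphs are simple, undirected, possibly infinite. In a connected graph $G$, $I_G(x,y)$ is the set of vertices on shortest $(x,y)$-paths; $A\subseteq V(G)$ is convex if $I_G(x,y)\subseteq A$ for all $x,y\in A$; $co_G(A)$ is the convex hull; a subgraph is convex if its vertex set is convex; $\mathcal{I}_G(A)=\bigcup_{x,y\in A}I_G(x,y)$. A partial cube is an isometric subgraph of a (possibly infinite) hypercube. A copoint at $x$ is a convex set maximal with respect to not containing $x$. The pre-hull number $ph(G)$ is the least $n$ with $co_G(C\cup\{x\})=\mathcal{I}^n_G(C\cup\{x\})$ for every vertex $x$ and every copoint $C$ at $x$. A graph is ph-homogeneous if each of its finite convex subgraphs has pre-hull number at most $1$. A set $A$ is gated if every vertex $x$ has a vertex $y\in A$ with $y\in I_G(x,z)$ for all $z\in A$. A graph $G$ is the gated amalgam of $G_0$ and $G_1$ if $G_0,G_1$ are isomorphic to two intersecting gated subgraphs of $G$ whose union is $G$. The weak Cartesian product of an infinite family of connected graphs is a connected component of their Cartesian product. *)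

From Stdlib Require Import List Arith.


Record Graph := mkGraph {
  V : Type;
  adj : V -> V -> Prop;
  adj_sym : forall x y, adj x y -> adj y x;
  adj_irrefl : forall x, ~ adj x x
}.

Inductive walk (G : Graph) : nat -> V G -> V G -> Prop :=
| walk0 : forall x, walk G 0 x x
| walkS : forall n x y z, adj G x y -> walk G n y z -> walk G (S n) x z.

Definition gdist (G : Graph) (x y : V G) (n : nat) : Prop :=
  walk G n x y /\ forall k, walk G k x y -> n <= k.

Definition connected (G : Graph) : Prop :=
  forall x y : V G, exists n, walk G n x y.

Definition interval (G : Graph) (x y z : V G) : Prop :=
  exists n m, walk G n x z /\ walk G m z y /\ forall k, walk G k x y -> n + m <= k.

Definition vset (G : Graph) := V G -> Prop.

Definition subset (G : Graph) (A B : vset G) : Prop := forall v, A v -> B v.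

Definition convex (G : Graph) (A : vset G) : Prop :=
  forall x y z, A x -> A y -> interval G x y z -> A z.

Definition hull (G : Graph) (A : vset G) : vset G :=
  fun z => forall B : vset G, convex G B -> subset G A B -> B z.

Definition copoint (G : Graph) (C : vset G) (x : V G) : Prop :=
  convex G C /\ ~ C x /\
  forall D : vset G, convex G D -> ~ D x -> subset G C D -> subset G D C.

Definition Iset (G : Graph) (A : vset G) : vset G :=
  fun z => exists x y, A x /\ A y /\ interval G x y z.

Fixpoint Iter (G : Graph) (n : nat) (A : vset G) : vset G :=
  match n with
  | 0 => A
  | S n' => Iset G (Iter G n' A)
  end.

Definition add1 (G : Graph) (C : vset G) (x : V G) : vset G :=
  fun v => C v \/ v = x.

Definition ph_works (G : Graph) (n : nat) : Prop :=
  forall (x : V G) (C : vset G), copoint G C x ->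
    forall z, hull G (add1 G C x) z <-> Iter G n (add1 G C x) z.

(* ph(G) <= 1  (ph(G) is the least n for which ph_works G n holds) *)
Definition ph_le1 (G : Graph) : Prop := exists n, n <= 1 /\ ph_works G n.

Definition induced (G : Graph) (S : vset G) : Graph.
Proof.
  refine (@mkGraph {v : V G | S v}
            (fun a b => adj G (proj1_sig a) (proj1_sig b)) _ _).
  - intros a b H; exact (adj_sym G _ _ H).
  - intros a; exact (adj_irrefl G _).
Defined.

Definition finite_set (G : Graph) (S : vset G) : Prop :=
  exists l : list (V G), forall v, S v -> In v l.

Definition ph_homogeneous (G : Graph) : Prop :=
  forall S : vset G, convex G S -> finite_set G S -> ph_le1 (induced G S).

(* the (possibly infinite) hypercube on index set I: finite subsets of I *)
Definition finite_support (I : Type) (s : I -> bool) : Prop :=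
  exists l : list I, forall i, s i = true -> In i l.

Definition hypercube (I : Type) : Graph.
Proof.
  refine (@mkGraph {s : I -> bool | finite_support I s}
    (fun s t => exists i, proj1_sig s i <> proj1_sig t i /\
                 forall j, proj1_sig s j <> proj1_sig t j -> j = i) _ _).
  - intros s t [i [Hi Hj]]. exists i. split.
    + intro E; apply Hi; symmetry; exact E.
    + intros j Hne; apply Hj; intro E; apply Hne; symmetry; exact E.
  - intros s [i [Hi _]]; apply Hi; reflexivity.
Defined.

Definition partial_cube (G : Graph) : Prop :=
  exists (I : Type) (f : V G -> V (hypercube I)),
    (forall x y, f x = f y -> x = y) /\
    (forall x y n, gdist G x y n <-> gdist (hypercube I) (f x) (f y) n).

Definition ph_hom_partial_cube (G : Graph) : Prop :=
  partial_cube G /\ ph_homogeneous G.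

Definition gated (G : Graph) (A : vset G) : Prop :=
  forall x : V G, exists y, A y /\ forall z, A z -> interval G x z y.

Definition graph_iso (G H : Graph) : Prop :=
  exists f : V G -> V H,
    (forall x y, f x = f y -> x = y) /\ (forall y, exists x, f x = y) /\
    (forall x y, adj G x y <-> adj H (f x) (f y)).

Definition gated_amalgam (G G0 G1 : Graph) : Prop :=
  exists A0 A1 : vset G,
    gated G A0 /\ gated G A1 /\ (exists v, A0 v /\ A1 v) /\
    (forall v, A0 v \/ A1 v) /\
    graph_iso G0 (induced G A0) /\ graph_iso G1 (induced G A1).

Definition cart_prod (I : Type) (F : I -> Graph) : Graph.
Proof.
  refine (@mkGraph (forall i, V (F i))
    (fun x y => exists i, adj (F i) (x i) (y i) /\ forall j, j <> i -> x j = y j) _ _).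
  - intros x y [i [Hi Hj]]. exists i. split.
    + exact (adj_sym _ _ _ Hi).
    + intros j Hne; symmetry; exact (Hj j Hne).
  - intros x [i [Hi _]]; exact (adj_irrefl _ _ Hi).
Defined.

Definition weak_prod (I : Type) (F : I -> Graph) (b : V (cart_prod I F)) : Graph :=
  induced (cart_prod I F) (fun x => exists n, walk (cart_prod I F) n b x).

Definition finite_type (I : Type) : Prop := exists l : list I, forall i, In i l.

(* Everything is read off isometric embeddings into hypercubes, where intervals are
   coordinatewise betweenness. Convex subgraphs inherit copoints, hulls and intervals through the
   inclusion, hence the bound ph <= 1. In a partial cube a nonempty copoint at x of a convex set S
   is a halfspace {v in S | v_e <> x_e}. For a weak product, embedded coordinatewise relative to
   a base point, such a halfspace lives in one factor, so a point of the hull of C + x is found on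
   a geodesic from x to C by working in that factor alone. For a gated amalgam G = A0 u A1, the
   gates to A0 and A1 are monotone for intervals; they push the hull of C + x into one side, where
   ph <= 1 holds, and the gate distance formula d(x, p) = d(x, pi x) + d(pi x, p) pulls the
   resulting geodesic back. An explicit embedding, v |-> (v's gate in A0, the difference between
   v and that gate seen in A1), shows that G is again a partial cube. Finite products are weak
   products. *)

From Stdlib Require Import List Arith Lia Bool FinFun.
From Stdlib Require Import Classical ClassicalEpsilon FunctionalExtensionality ProofIrrelevance.
Import ListNotations.

(** * Walks and distances *)

Section Walks.
Context {G : Graph}.

Lemma walk_app n x y m z : walk G n x y -> walk G m y z -> walk G (n + m) x z.
Proof. induction 1; intros; simpl; [assumption | econstructor; eauto]. Qed.

Lemma walk_one x y : adj G x y -> walk G 1 x y.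
Proof. intros; econstructor; eauto; constructor. Qed.

Lemma walk_rev n x y : walk G n x y -> walk G n y x.
Proof.
  induction 1; [constructor|].
  replace (S n) with (n + 1) by lia.
  eauto using walk_app, walk_one, adj_sym.
Qed.

Lemma walk_zero_eq x y : walk G 0 x y -> x = y.
Proof. now inversion 1. Qed.

Lemma walk_succ_inv n x z : walk G (S n) x z -> exists y, adj G x y /\ walk G n y z.
Proof. inversion 1; eauto. Qed.

Lemma interval_sym x y z : interval G x y z -> interval G y x z.
Proof.
  intros (n & m & Hn & Hm & Hmin). exists m, n.
  repeat split; try now apply walk_rev.
  intros k Hk. specialize (Hmin k (walk_rev _ _ _ Hk)). lia.
Qed.

Lemma interval_same x z : interval G x x z -> z = x.
Proof.
  intros (n & m & Hn & _ & Hmin). specialize (Hmin 0 (walk0 G x)).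
  replace n with 0 in Hn by lia. symmetry. now apply walk_zero_eq.
Qed.

End Walks.

Lemma walk_map (H G : Graph) (phi : V H -> V G) :
  (forall x y, adj H x y -> adj G (phi x) (phi y)) ->
  forall n x y, walk H n x y -> walk G n (phi x) (phi y).
Proof. intros Hphi; induction 1; econstructor; eauto. Qed.

Lemma ex_least (P : nat -> Prop) : (exists n, P n) -> exists n, P n /\ forall k, P k -> n <= k.
Proof.
  intros HP.
  destruct (dec_inh_nat_subset_has_unique_least_element P (fun n => classic (P n)) HP)
    as (n & Hn & _).
  now exists n.
Qed.

Definition is_dist (G : Graph) (d : V G -> V G -> nat) : Prop :=
  (forall x y, walk G (d x y) x y) /\ (forall x y k, walk G k x y -> d x y <= k).

Section Distance.
Context {G : Graph} {d : V G -> V G -> nat} (Hd : is_dist G d).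

Lemma dist_walk x y : walk G (d x y) x y.
Proof. apply Hd. Qed.

Lemma dist_le_walk x y k : walk G k x y -> d x y <= k.
Proof. apply Hd. Qed.

Lemma dist_triangle x y z : d x z <= d x y + d y z.
Proof. apply dist_le_walk, walk_app with y; apply dist_walk. Qed.

Lemma dist_sym x y : d x y = d y x.
Proof. apply Nat.le_antisymm; apply dist_le_walk, walk_rev, dist_walk. Qed.

Lemma dist_refl x : d x x = 0.
Proof. pose proof (dist_le_walk x x 0 (walk0 G x)). lia. Qed.

Lemma dist_eq0 x y : d x y = 0 -> x = y.
Proof. intros E. apply walk_zero_eq. rewrite <- E. apply dist_walk. Qed.

Lemma dist_adj x y : adj G x y -> d x y <= 1.
Proof. intros. now apply dist_le_walk, walk_one. Qed.

Lemma interval_dist x y z : interval G x y z <-> d x z + d z y = d x y.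
Proof.
  split.
  - intros (n & m & Hn & Hm & Hmin).
    pose proof (dist_le_walk _ _ _ Hn). pose proof (dist_le_walk _ _ _ Hm).
    pose proof (Hmin _ (dist_walk x y)). pose proof (dist_triangle x z y). lia.
  - intros E. exists (d x z), (d z y). repeat split; try apply dist_walk.
    intros k Hk. pose proof (dist_le_walk _ _ _ Hk). lia.
Qed.

Lemma gdist_dist x y n : gdist G x y n <-> n = d x y.
Proof.
  split.
  - intros [Hn Hmin]. pose proof (dist_le_walk _ _ _ Hn). pose proof (Hmin _ (dist_walk x y)). lia.
  - intros ->. split; [apply dist_walk | apply dist_le_walk].
Qed.

Lemma interval_l x y : interval G x y x.
Proof. apply interval_dist. rewrite dist_refl. lia. Qed.

Lemma interval_r x y : interval G x y y.
Proof. apply interval_dist. rewrite dist_refl. lia. Qed.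

Lemma dist_step x y : x <> y -> exists u, adj G x u /\ interval G x y u /\ S (d u y) = d x y.
Proof.
  intros Hxy. pose proof (dist_walk x y) as W.
  destruct (d x y) as [|n] eqn:E; [now apply dist_eq0 in E|].
  destruct (walk_succ_inv _ _ _ W) as (u & Hu & Wu).
  pose proof (dist_le_walk _ _ _ Wu). pose proof (dist_adj _ _ Hu).
  pose proof (dist_triangle x u y).
  exists u. repeat split; [assumption | apply interval_dist | ]; lia.
Qed.

Lemma is_dist_connected : connected G.
Proof. intros x y. exists (d x y). apply dist_walk. Qed.

End Distance.

Lemma is_dist_unique (G : Graph) d d' : is_dist G d -> is_dist G d' -> forall x y, d x y = d' x y.
Proof.
  intros Hd Hd' x y.
  apply Nat.le_antisymm;
    [apply (dist_le_walk Hd), (dist_walk Hd') | apply (dist_le_walk Hd'), (dist_walk Hd)].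
Qed.

Lemma connected_is_dist (G : Graph) : connected G -> exists d, is_dist G d.
Proof.
  intros Hc.
  assert (Hm : forall x y : V G, exists n, walk G n x y /\ forall k, walk G k x y -> n <= k)
    by (intros x y; apply ex_least, Hc).
  exists (fun x y => proj1_sig (constructive_indefinite_description _ (Hm x y))).
  split; intros x y; destruct (constructive_indefinite_description _ (Hm x y)) as (n & Hn & Hmin); auto.
Qed.

(** * Hypercubes *)

Definition eqdec {A : Type} (a b : A) : {a = b} + {a <> b} := excluded_middle_informative (a = b).

Lemma xorb_true_iff_neq a b : xorb a b = true <-> a <> b.
Proof. destruct a, b; simpl; intuition congruence. Qed.

Lemma xorb_cancel_r a a' c : xorb a c = xorb a' c <-> a = a'.
Proof. destruct a, a', c; simpl; intuition congruence. Qed.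

Lemma xorb_cancel_negb a a' c : xorb a c = negb (xorb a' c) <-> a = negb a'.
Proof. destruct a, a', c; simpl; intuition congruence. Qed.

Section DiffCount.
Context {I : Type}.
Implicit Types (L : list I) (a b c : I -> bool).

Definition ndiff L a b : nat := length (filter (fun i => xorb (a i) (b i)) L).

Definition covers L a b : Prop := forall i, a i <> b i -> In i L.

Lemma ndiff_cons i L a b : ndiff (i :: L) a b = Nat.b2n (xorb (a i) (b i)) + ndiff L a b.
Proof. unfold ndiff; simpl. now destruct (xorb (a i) (b i)). Qed.

Lemma ndiff_app L L' a b : ndiff (L ++ L') a b = ndiff L a b + ndiff L' a b.
Proof. induction L as [|i L IH]; [reflexivity|]. simpl app. rewrite !ndiff_cons, IH. lia. Qed.

Lemma ndiff_ext L a a' b b' :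
  (forall i, In i L -> a i = a' i /\ b i = b' i) -> ndiff L a b = ndiff L a' b'.
Proof.
  induction L as [|i L IH]; intros H; [reflexivity|]. rewrite !ndiff_cons.
  destruct (H i (or_introl eq_refl)) as [-> ->]. rewrite IH; auto. intros; apply H; now right.
Qed.

Lemma ndiff_refl L a : ndiff L a a = 0.
Proof. induction L as [|i L IH]; [reflexivity|]. now rewrite ndiff_cons, xorb_nilpotent. Qed.

Lemma ndiff_add L a b a' b' a'' b'' :
  (forall i, Nat.b2n (xorb (a i) (b i))
             = Nat.b2n (xorb (a' i) (b' i)) + Nat.b2n (xorb (a'' i) (b'' i))) ->
  ndiff L a b = ndiff L a' b' + ndiff L a'' b''.
Proof. intros H. induction L as [|i L IH]; [reflexivity|]. rewrite !ndiff_cons, IH, H. lia. Qed.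

Lemma ndiff_triangle L a b c : ndiff L a c <= ndiff L a b + ndiff L b c.
Proof.
  induction L as [|i L IH]; [reflexivity|]. rewrite !ndiff_cons.
  destruct (a i), (b i), (c i); simpl; lia.
Qed.

Lemma ndiff_between L a b c :
  ndiff L a b + ndiff L b c = ndiff L a c <-> forall i, In i L -> b i = a i \/ b i = c i.
Proof.
  induction L as [|i L IH]; [simpl; tauto|]. rewrite !ndiff_cons.
  pose proof (ndiff_triangle L a b c) as T.
  assert (Ti : Nat.b2n (xorb (a i) (c i)) <= Nat.b2n (xorb (a i) (b i)) + Nat.b2n (xorb (b i) (c i))
               /\ (Nat.b2n (xorb (a i) (b i)) + Nat.b2n (xorb (b i) (c i)) = Nat.b2n (xorb (a i) (c i))
                   <-> b i = a i \/ b i = c i))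
    by (destruct (a i), (b i), (c i); simpl; (split; [lia|]); split; intros Hb;
        (lia || auto || (destruct Hb; congruence))).
  split.
  - intros E j [<- | Hj]; [apply Ti; lia|]. apply IH; [lia | assumption].
  - intros H.
    assert (Hi : Nat.b2n (xorb (a i) (b i)) + Nat.b2n (xorb (b i) (c i)) = Nat.b2n (xorb (a i) (c i)))
      by (apply Ti, H; now left).
    assert (HL : ndiff L a b + ndiff L b c = ndiff L a c) by (apply IH; intros; apply H; now right).
    lia.
Qed.

Lemma ndiff_cover_indep L L' a b :
  NoDup L -> NoDup L' -> covers L a b -> covers L' a b -> ndiff L a b = ndiff L' a b.
Proof.
  intros N N' C C'. unfold ndiff.
  apply Nat.le_antisymm; apply NoDup_incl_length; try (apply NoDup_filter; assumption);
    intros i Hi; apply filter_In in Hi as [_ Hi]; apply filter_In; split; auto;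
    apply xorb_true_iff_neq in Hi; auto.
Qed.

Lemma ndiff_le1 L a b i0 : NoDup L -> (forall i, a i <> b i -> i = i0) -> ndiff L a b <= 1.
Proof.
  intros N H. unfold ndiff.
  assert (Hf : forall i, In i (filter (fun i => xorb (a i) (b i)) L) -> i = i0)
    by (intros i Hi; apply filter_In in Hi as [_ Hi]; now apply H, xorb_true_iff_neq).
  apply (NoDup_filter (fun i => xorb (a i) (b i))) in N.
  destruct (filter _ L) as [|j [|k l]]; simpl; [lia | lia|].
  rewrite (Hf j), (Hf k) in N by (simpl; auto). inversion N as [|? ? Hn]. simpl in Hn; tauto.
Qed.

Lemma ndiff_lt L a a' b i0 :
  In i0 L -> NoDup L -> (forall i, a' i <> a i -> i = i0) -> a' i0 = b i0 -> a i0 <> b i0 ->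
  ndiff L a' b < ndiff L a b.
Proof.
  intros Hin N Ha E Hne.
  assert (Hsame : forall i, i <> i0 -> a' i = a i)
    by (intros i Hi; destruct (bool_dec (a' i) (a i)) as [|n]; [assumption | now apply Ha in n]).
  induction L as [|i L IH]; [destruct Hin|]. inversion N as [|? ? Hi N']; subst. rewrite !ndiff_cons.
  destruct Hin as [<- | Hin].
  - rewrite (ndiff_ext L a' a b b) by (intros j Hj; split; [apply Hsame; congruence | reflexivity]).
    rewrite E, xorb_nilpotent. apply xorb_true_iff_neq in Hne. rewrite Hne. simpl. lia.
  - rewrite (Hsame i) by congruence. specialize (IH Hin N'). lia.
Qed.

End DiffCount.

Lemma ndiff_map {I K : Type} (g : K -> I) (L : list K) (a b : I -> bool) :
  ndiff (map g L) a b = ndiff L (fun j => a (g j)) (fun j => b (g j)).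
Proof. induction L as [|i L IH]; [reflexivity|]. simpl map. now rewrite !ndiff_cons, IH. Qed.

Section Hypercube.
Context {I : Type}.
Implicit Types s t u : V (hypercube I).

Definition bits s : I -> bool := proj1_sig s.

Definition supp s : list I := proj1_sig (constructive_indefinite_description _ (proj2_sig s)).

Lemma supp_spec s i : bits s i = true -> In i (supp s).
Proof. unfold supp. destruct (constructive_indefinite_description _ _). auto. Qed.

Lemma bits_inj s t : (forall i, bits s i = bits t i) -> s = t.
Proof.
  destruct s as [s Hs], t as [t Ht]; unfold bits; simpl; intros H.
  assert (s = t) as <- by (now apply functional_extensionality).
  f_equal. apply proof_irrelevance.
Qed.

Definition supp_list (vs : list (V (hypercube I))) : list I := nodup eqdec (flat_map supp vs).

Lemma NoDup_supp_list vs : NoDup (supp_list vs).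
Proof. apply NoDup_nodup. Qed.

Definition ham s t : nat := ndiff (supp_list [s; t]) (bits s) (bits t).

Lemma covers_supp_list vs s t : In s vs -> In t vs -> covers (supp_list vs) (bits s) (bits t).
Proof.
  intros Hs Ht i Hi. apply nodup_In, in_flat_map.
  destruct (bits s i) eqn:E; [exists s | exists t]; split; auto; apply supp_spec; auto.
  destruct (bits t i); congruence.
Qed.

Lemma ham_ndiff s t L : NoDup L -> covers L (bits s) (bits t) -> ham s t = ndiff L (bits s) (bits t).
Proof.
  intros N C. apply ndiff_cover_indep; auto using NoDup_supp_list.
  apply covers_supp_list; simpl; auto.
Qed.

Lemma ham_supp_list vs s t : In s vs -> In t vs -> ham s t = ndiff (supp_list vs) (bits s) (bits t).
Proof. intros. apply ham_ndiff; auto using NoDup_supp_list, covers_supp_list. Qed.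

Lemma hypercube_adj s t :
  adj (hypercube I) s t <-> exists i, bits s i <> bits t i /\ forall j, bits s j <> bits t j -> j = i.
Proof. reflexivity. Qed.

Definition flip s (i : I) : V (hypercube I).
Proof.
  exists (fun j => if eqdec j i then negb (bits s i) else bits s j).
  exists (i :: supp s). intros j. destruct (eqdec j i) as [->|n]; [now left|].
  intros Hj. right. now apply supp_spec.
Defined.

Lemma bits_flip s i j : bits (flip s i) j = if eqdec j i then negb (bits s i) else bits s j.
Proof. reflexivity. Qed.

Lemma adj_flip s i : adj (hypercube I) s (flip s i).
Proof.
  apply hypercube_adj. exists i. rewrite bits_flip. destruct (eqdec i i) as [_|n]; [|congruence].
  split; [now destruct (bits s i)|].
  intros j. rewrite bits_flip. destruct (eqdec j i); congruence.
Qed.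

Lemma walk_ndiff L : NoDup L ->
  forall s t, covers L (bits s) (bits t) -> walk (hypercube I) (ndiff L (bits s) (bits t)) s t.
Proof.
  induction L as [|i L IH]; intros N s t C.
  - replace t with s by (apply bits_inj; intros i; apply NNPP; intros n; apply (C i n)).
    constructor.
  - inversion N as [|? ? Hi N']; subst. rewrite ndiff_cons.
    destruct (bool_dec (bits s i) (bits t i)) as [E|E].
    + rewrite E, xorb_nilpotent. apply IH; auto.
      intros j Hj. destruct (C j Hj) as [<-|]; [congruence | assumption].
    + apply xorb_true_iff_neq in E as E'. rewrite E'.
      econstructor; [apply (adj_flip s i)|].
      rewrite (ndiff_ext L (bits s) (bits (flip s i)) (bits t) (bits t))
        by (intros j Hj; rewrite bits_flip; destruct (eqdec j i); subst; tauto).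
      apply IH; auto. intros j Hj. rewrite bits_flip in Hj. destruct (eqdec j i) as [->|n].
      * exfalso. apply Hj. now destruct (bits s i), (bits t i).
      * destruct (C j Hj) as [<-|]; [congruence | assumption].
Qed.

Lemma ndiff_le_walk L : NoDup L ->
  forall k s t, walk (hypercube I) k s t -> ndiff L (bits s) (bits t) <= k.
Proof.
  intros N. induction 1 as [x|k x y z Hxy _ IH]; [now rewrite ndiff_refl|].
  apply hypercube_adj in Hxy as (i & _ & Hi).
  pose proof (ndiff_le1 L (bits x) (bits y) i N Hi).
  pose proof (ndiff_triangle L (bits x) (bits y) (bits z)). lia.
Qed.

Lemma hypercube_dist : is_dist (hypercube I) ham.
Proof.
  split.
  - intros s t. unfold ham.
    apply walk_ndiff; [apply NoDup_supp_list | apply covers_supp_list; simpl; auto].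
  - intros s t k. apply ndiff_le_walk, NoDup_supp_list.
Qed.

Lemma ham_between s u t :
  ham s u + ham u t = ham s t <-> forall i, bits u i = bits s i \/ bits u i = bits t i.
Proof.
  set (vs := [s; u; t]).
  rewrite (ham_supp_list vs s u), (ham_supp_list vs u t), (ham_supp_list vs s t) by (simpl; auto).
  rewrite ndiff_between. split; intros H i; auto.
  destruct (in_dec eqdec i (supp_list vs)) as [Hin|Hin]; auto.
  left. apply NNPP. intros Hn. apply Hin, (covers_supp_list vs s u); simpl; auto.
Qed.

Lemma ham_eq0 s t : ham s t = 0 <-> forall i, bits s i = bits t i.
Proof.
  split.
  - intros H. now apply (dist_eq0 hypercube_dist) in H as ->.
  - intros H. apply bits_inj in H as ->. apply (dist_refl hypercube_dist).
Qed.

Lemma ham_le1 s t i0 : (forall i, bits s i <> bits t i -> i = i0) -> ham s t <= 1.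
Proof. apply ndiff_le1, NoDup_supp_list. Qed.

Lemma ham_lt s s' t i0 :
  (forall i, bits s' i <> bits s i -> i = i0) -> bits s' i0 = bits t i0 -> bits s i0 <> bits t i0 ->
  ham s' t < ham s t.
Proof.
  intros H E Hne. set (vs := [s; s'; t]).
  rewrite (ham_supp_list vs s t), (ham_supp_list vs s' t) by (simpl; auto).
  apply ndiff_lt with i0; auto using NoDup_supp_list.
  apply (covers_supp_list vs s t); simpl; auto.
Qed.

Lemma ham_add s t s' t' s'' t'' :
  (forall i, Nat.b2n (xorb (bits s i) (bits t i))
             = Nat.b2n (xorb (bits s' i) (bits t' i)) + Nat.b2n (xorb (bits s'' i) (bits t'' i))) ->
  ham s t = ham s' t' + ham s'' t''.
Proof.
  intros H. set (vs := [s; t; s'; t'; s''; t'']).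
  rewrite (ham_supp_list vs s t), (ham_supp_list vs s' t'), (ham_supp_list vs s'' t'')
    by (simpl; tauto).
  now apply ndiff_add.
Qed.

Definition cube_xor s t : V (hypercube I).
Proof.
  exists (fun j => xorb (bits s j) (bits t j)). exists (supp s ++ supp t). intros j H.
  apply in_or_app. destruct (bits s j) eqn:E; [left | right]; apply supp_spec; auto.
Defined.

Lemma bits_cube_xor s t j : bits (cube_xor s t) j = xorb (bits s j) (bits t j).
Proof. reflexivity. Qed.

End Hypercube.

Definition cube_pair {I K : Type} (s : V (hypercube I)) (t : V (hypercube K)) : V (hypercube (I + K)).
Proof.
  exists (fun p => match p with inl j => bits s j | inr j => bits t j end).
  exists (map inl (supp s) ++ map inr (supp t)). intros [j|j] H; apply in_or_app;
    [left | right]; apply in_map, supp_spec; auto.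
Defined.

Lemma ham_pair {I K : Type} (s s' : V (hypercube I)) (t t' : V (hypercube K)) :
  ham (cube_pair s t) (cube_pair s' t') = ham s s' + ham t t'.
Proof.
  set (L := supp_list [s; s']). set (L' := supp_list [t; t']).
  assert (C : covers L (bits s) (bits s')) by (apply covers_supp_list; simpl; auto).
  assert (C' : covers L' (bits t) (bits t')) by (apply covers_supp_list; simpl; auto).
  rewrite (ham_supp_list [s; s'] s s'), (ham_supp_list [t; t'] t t') by (simpl; auto).
  rewrite (ham_ndiff _ _ (map inl L ++ map inr L')).
  - now rewrite ndiff_app, !ndiff_map.
  - apply NoDup_app;
      try (apply Injective_map_NoDup; [intros ? ? E; now inversion E | apply NoDup_supp_list]).
    intros p Hp Hp'. apply in_map_iff in Hp as (? & <- & _), Hp' as (? & E & _). discriminate.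
  - intros [j|j] H; apply in_or_app; [left | right]; apply in_map; [apply C | apply C']; exact H.
Qed.

Definition cube_embedding (G : Graph) (I : Type) (f : V G -> V (hypercube I)) : Prop :=
  is_dist G (fun x y => ham (f x) (f y)).

Lemma partial_cube_embedding (G : Graph) : partial_cube G -> exists I f, cube_embedding G I f.
Proof.
  intros (I & f & _ & Hf). exists I, f.
  assert (Hg : forall x y, gdist G x y (ham (f x) (f y)))
    by (intros x y; apply Hf, (gdist_dist hypercube_dist); reflexivity).
  split; intros x y; [apply Hg | apply Hg].
Qed.

Lemma cube_embedding_partial_cube (G : Graph) I f : cube_embedding G I f -> partial_cube G.
Proof.
  intros Hf. exists I, f. split.
  - intros x y E. apply (dist_eq0 Hf). simpl. rewrite E. apply (dist_refl hypercube_dist).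
  - intros x y n. rewrite (gdist_dist Hf), (gdist_dist hypercube_dist). reflexivity.
Qed.

Lemma partial_cube_connected (G : Graph) : partial_cube G -> connected G.
Proof.
  intros (I & f & Hf)%partial_cube_embedding. exact (is_dist_connected Hf).
Qed.

Lemma cube_embedding_of (G : Graph) I (f : V G -> V (hypercube I)) :
  (forall x y, adj G x y -> ham (f x) (f y) <= 1) ->
  (forall x y, ham (f x) (f y) = 0 -> x = y) ->
  (forall x y, 0 < ham (f x) (f y) -> exists x', adj G x x' /\ ham (f x') (f y) < ham (f x) (f y)) ->
  cube_embedding G I f.
Proof.
  intros Hadj Heq0 Hstep. split.
  - intros x y. remember (ham (f x) (f y)) as n eqn:En. revert x En.
    induction n as [n IH] using (well_founded_induction lt_wf). intros x En.
    destruct n as [|n].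
    + symmetry in En. apply Heq0 in En as ->. constructor.
    + destruct (Hstep x y) as (x' & A & Hlt); [lia|].
      pose proof (Hadj _ _ A). pose proof (dist_triangle hypercube_dist (f x) (f x') (f y)).
      econstructor; [eassumption|]. apply (IH n); lia.
  - intros x y k. induction 1 as [x|k x x' y A _ IH].
    + simpl. rewrite (dist_refl hypercube_dist). reflexivity.
    + pose proof (Hadj _ _ A). pose proof (dist_triangle hypercube_dist (f x) (f x') (f y)). lia.
Qed.

Section CubeEmbedding.
Context {G : Graph} {I : Type} {f : V G -> V (hypercube I)} (Hf : cube_embedding G I f).

Lemma interval_bits x y z :
  interval G x y z <-> forall i, bits (f z) i = bits (f x) i \/ bits (f z) i = bits (f y) i.
Proof. rewrite (interval_dist Hf). apply ham_between. Qed.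

Lemma halfspace_convex e b : convex G (fun v => bits (f v) e = b).
Proof. intros x y z Hx Hy Hi. rewrite interval_bits in Hi. destruct (Hi e); congruence. Qed.

Lemma cube_embedding_bits_inj x y : (forall i, bits (f x) i = bits (f y) i) -> x = y.
Proof. intros H. apply (dist_eq0 Hf). simpl. now apply ham_eq0. Qed.

Lemma adj_one_bit x y : adj G x y ->
  exists e, bits (f x) e <> bits (f y) e /\ forall j, bits (f x) j <> bits (f y) j -> j = e.
Proof.
  intros A. apply hypercube_adj.
  assert (Hd : ham (f x) (f y) = 1).
  { pose proof (dist_adj Hf _ _ A). simpl in *.
    destruct (ham (f x) (f y)) eqn:E; [|lia].
    apply (dist_eq0 Hf) in E as ->. now apply adj_irrefl in A. }
  pose proof (dist_walk hypercube_dist (f x) (f y)) as W. rewrite Hd in W.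
  destruct (walk_succ_inv _ _ _ W) as (w & Hw & W0). now apply walk_zero_eq in W0 as <-.
Qed.

Lemma step_toward x y : x <> y -> exists u e, adj G x u /\ bits (f x) e <> bits (f u) e /\
  (forall j, bits (f x) j <> bits (f u) j -> j = e) /\ bits (f u) e = bits (f y) e.
Proof.
  intros Hxy. destruct (dist_step Hf x y Hxy) as (u & A & Hi & _).
  destruct (adj_one_bit x u A) as (e & He & Hu). exists u, e. repeat split; auto.
  rewrite interval_bits in Hi. destruct (Hi e); congruence.
Qed.

Lemma convex_edge_side (C : vset G) c u e : convex G C -> C c -> ~ C u -> adj G c u ->
  (forall j, bits (f c) j <> bits (f u) j -> j = e) -> forall v, C v -> bits (f v) e = bits (f c) e.
Proof.
  intros HC Cc nCu _ Hu v Cv. apply NNPP. intros Hv. apply nCu, (HC c v u Cc Cv).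
  apply interval_bits. intros i.
  destruct (bool_dec (bits (f u) i) (bits (f c) i)) as [|Hi]; [now left|].
  right. assert (i = e) as -> by (apply Hu; congruence).
  destruct (bits (f u) e), (bits (f c) e), (bits (f v) e); congruence.
Qed.

End CubeEmbedding.

(** * Hulls, copoints and the pre-hull number *)

Definition set_eq {G : Graph} (A B : vset G) : Prop := forall v, A v <-> B v.

Definition interval_set (G : Graph) (x : V G) (C : vset G) : vset G :=
  fun z => exists c, C c /\ interval G x c z.

Section Hulls.
Context {G : Graph}.
Implicit Types A B C : vset G.

Lemma convex_inter A B : convex G A -> convex G B -> convex G (fun v => A v /\ B v).
Proof. intros HA HB x y z [] [] Hi. split; [apply (HA x y z) | apply (HB x y z)]; auto. Qed.

Lemma hull_convex A : convex G (hull G A).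
Proof. intros x y z Hx Hy Hi B HB Hs. apply (HB x y z); [apply Hx | apply Hy |]; auto. Qed.

Lemma subset_hull A : subset G A (hull G A).
Proof. intros v Hv B HB Hs. now apply Hs. Qed.

Lemma hull_smallest A B : convex G B -> subset G A B -> subset G (hull G A) B.
Proof. intros HB Hs v Hv. now apply Hv. Qed.

Lemma hull_ext A B : set_eq A B -> subset G (hull G A) (hull G B).
Proof. intros E z H B' HB' Hs. apply H; auto. intros v Hv. apply Hs, E, Hv. Qed.

Lemma Iset_ext A B : set_eq A B -> subset G (Iset G A) (Iset G B).
Proof. intros E z (x & y & Hx & Hy & Hi). exists x, y. repeat split; auto; apply E; auto. Qed.

Lemma Iset_subset_hull A : subset G (Iset G A) (hull G A).
Proof. intros v (x & y & Hx & Hy & Hi) B HB Hs. apply (HB x y v); auto. Qed.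

Lemma subset_Iset A : subset G A (Iset G A).
Proof.
  intros v Hv. exists v, v. repeat split; auto.
  exists 0, 0. repeat split; [constructor | constructor | lia].
Qed.

Lemma hull_add1_empty C x z : (forall c, ~ C c) -> hull G (add1 G C x) z -> z = x.
Proof.
  intros HC. apply (hull_smallest (add1 G C x) (fun v => v = x)).
  - intros u w t -> -> Hi. now apply interval_same in Hi.
  - intros v [Hv | ->]; [now apply HC in Hv | reflexivity].
Qed.

Lemma hull_add1_subset S C x : convex G S -> subset G C S -> S x -> subset G (hull G (add1 G C x)) S.
Proof. intros HS HCS Sx. apply hull_smallest; [exact HS|]. intros v [Cv | ->]; auto. Qed.

Lemma Iset_add1_interval_set C x z : interval_set G x C z -> Iset G (add1 G C x) z.
Proof. intros (c & Cc & Hi). exists x, c. repeat split; [now right | now left | assumption]. Qed.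

Lemma Iset_add1_cases {d} (Hd : is_dist G d) C x z c0 : convex G C -> C c0 ->
  Iset G (add1 G C x) z -> C z \/ interval_set G x C z.
Proof.
  intros HC Cc0 (a & a' & [Ca | ->] & [Ca' | ->] & Hi).
  - left. now apply (HC a a' z).
  - right. exists a. split; [assumption | now apply interval_sym].
  - right. now exists a'.
  - right. apply interval_same in Hi as ->. exists c0. split; [assumption | apply (interval_l Hd)].
Qed.

End Hulls.

(* Copoints and pre-hull number at most 1 of the subgraph induced by S, expressed inside G. *)
Definition copoint_in (G : Graph) (S C : vset G) (x : V G) : Prop :=
  subset G C S /\ convex G C /\ ~ C x /\
  forall D : vset G, subset G D S -> convex G D -> ~ D x -> subset G C D -> subset G D C.

Definition ph_le1_on (G : Graph) (S : vset G) : Prop :=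
  forall x C, S x -> copoint_in G S C x -> subset G (hull G (add1 G C x)) (Iset G (add1 G C x)).

Lemma ph_le1_iff (G : Graph) : ph_le1 G <-> ph_le1_on G (fun _ => True).
Proof.
  split.
  - intros (n & Hn & Hw) x C _ (_ & HC & Cx & Hmax) z Hz.
    assert (Hcop : copoint G C x)
      by (repeat split; auto; intros D HD Dx HCD; apply Hmax; auto; now intros v _).
    pose proof (proj1 (Hw x C Hcop z) Hz) as Hz'.
    destruct n as [|[|n]]; [exact (subset_Iset _ z Hz') | exact Hz' | lia].
  - intros H. exists 1. split; [lia|]. intros x C (HC & Cx & Hmax) z. split.
    + apply H; [exact I|]. repeat split; auto.
    + apply Iset_subset_hull.
Qed.

Lemma ph_le1_on_ext (G : Graph) (S S' : vset G) : set_eq S S' -> ph_le1_on G S -> ph_le1_on G S'.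
Proof.
  intros E H x C Sx (HCS & HC & Cx & Hmax). apply H; [now apply E|].
  repeat split; auto. intros v Hv; apply E; auto.
  intros D HDS HD Dx HCD. apply Hmax; auto. intros v Hv; apply E; auto.
Qed.

Section Copoints.
Context {G : Graph} {I : Type} {f : V G -> V (hypercube I)} (Hf : cube_embedding G I f).

Lemma copoint_halfspace S C x c0 : convex G S -> S x -> copoint_in G S C x -> C c0 ->
  exists e, forall v, C v <-> S v /\ bits (f v) e = negb (bits (f x) e).
Proof.
  intros HS Sx (HCS & HC & Cx & Hmax) Cc0.
  destruct (ex_least (fun n => exists c, C c /\ ham (f c) (f x) = n)) as (n & (c & Cc & <-) & Hmin);
    [eauto|].
  assert (Hcx : c <> x) by congruence.
  destruct (dist_step Hf c x Hcx) as (u & A & Hi & Hdu).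
  assert (Su : S u) by (apply (HS c x u); auto).
  assert (Cu : ~ C u)
    by (intros Cu; specialize (Hmin _ (ex_intro _ u (conj Cu eq_refl))); simpl in *; lia).
  destruct (adj_one_bit Hf c u A) as (e & He & Hu).
  assert (Hxe : bits (f x) e = bits (f u) e)
    by (rewrite (interval_bits Hf) in Hi; destruct (Hi e); congruence).
  pose proof (convex_edge_side Hf C c u e HC Cc Cu A Hu) as Hside.
  exists e. intros v. split.
  - intros Cv. split; [auto|]. rewrite Hside, Hxe by assumption.
    destruct (bits (f c) e), (bits (f u) e); simpl; congruence.
  - intros [Sv Hv]. apply (Hmax (fun v => S v /\ bits (f v) e = bits (f c) e)).
    + intros w [Hw _]; auto.
    + apply convex_inter; [assumption | apply (halfspace_convex Hf)].
    + intros [_ Hx]. congruence.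
    + intros w Cw. split; auto.
    + split; [assumption|]. rewrite Hv, Hxe. destruct (bits (f c) e), (bits (f u) e); simpl; congruence.
Qed.

End Copoints.

(** * Convex embeddings *)

Definition convex_embedding (H G : Graph) (phi : V H -> V G) : Prop :=
  (forall x y, phi x = phi y -> x = y) /\ (forall x y, adj H x y <-> adj G (phi x) (phi y)) /\
  convex G (fun w => exists x, phi x = w).

Definition img {H G : Graph} (phi : V H -> V G) (S : vset H) : vset G :=
  fun w => exists x, S x /\ phi x = w.

Lemma img_add1 {H G : Graph} (phi : V H -> V G) C x :
  set_eq (add1 G (img phi C) (phi x)) (img phi (add1 H C x)).
Proof.
  intros w. split.
  - intros [(u & Cu & <-) | ->]; [exists u | exists x]; split; auto; [now left | now right].
  - intros (u & [Cu | ->] & <-); [left; now exists u | now right].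
Qed.

Section ConvexEmbedding.
Context {H G : Graph} {phi : V H -> V G} (Hc : convex_embedding H G phi).

Lemma convex_embedding_inj x y : phi x = phi y -> x = y.
Proof. apply Hc. Qed.

Lemma convex_embedding_walk n x y : walk H n x y -> walk G n (phi x) (phi y).
Proof. apply walk_map. intros; now apply Hc. Qed.

Lemma shortest_walk_lift m u v : walk G m u v -> (forall k, walk G k u v -> m <= k) ->
  forall x y, phi x = u -> phi y = v -> walk H m x y.
Proof.
  revert u. induction m as [|m IH]; intros u Hw Hmin x y Hx Hy.
  - apply walk_zero_eq in Hw as ->. rewrite <- Hy in Hx.
    apply convex_embedding_inj in Hx as ->. constructor.
  - destruct (walk_succ_inv _ _ _ Hw) as (w & Hw1 & Hw2).
    assert (Hi : interval G u v w) by (exists 1, m; repeat split; auto using walk_one).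
    destruct (proj2 (proj2 Hc) u v w) as [x' <-]; eauto.
    econstructor; [apply Hc; rewrite Hx; eassumption|].
    apply (IH (phi x')); auto.
    intros k Hk. enough (S m <= S k) by lia. apply Hmin. econstructor; eauto.
Qed.

Lemma walk_pullback n x y : walk G n (phi x) (phi y) -> exists m, m <= n /\ walk H m x y.
Proof.
  intros Hw. destruct (ex_least (fun k => walk G k (phi x) (phi y))) as (m & Hm & Hmin); eauto.
  exists m. split; auto. eapply shortest_walk_lift; eauto.
Qed.

Lemma convex_embedding_interval x y z : interval H x y z <-> interval G (phi x) (phi y) (phi z).
Proof.
  split.
  - intros (n & m & H1 & H2 & H3). exists n, m. repeat split; auto using convex_embedding_walk.
    intros k (k' & Hk' & Hw)%walk_pullback. pose proof (H3 _ Hw). lia.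
  - intros (n & m & (n' & Hn' & H1)%walk_pullback & (m' & Hm' & H2)%walk_pullback & H3).
    exists n', m'. repeat split; auto.
    intros k Hk%convex_embedding_walk. pose proof (H3 _ Hk). lia.
Qed.

Lemma interval_in_image x y w : interval G (phi x) (phi y) w -> exists z, phi z = w.
Proof. intros Hi. apply (proj2 (proj2 Hc) (phi x) (phi y) w); eauto. Qed.

Lemma convex_embedding_dist d : is_dist G d -> is_dist H (fun x y => d (phi x) (phi y)).
Proof.
  intros Hd. split.
  - intros x y. destruct (walk_pullback _ x y (dist_walk Hd (phi x) (phi y))) as (m & Hm & Hw).
    pose proof (dist_le_walk Hd _ _ _ (convex_embedding_walk _ _ _ Hw)).
    now replace (d (phi x) (phi y)) with m by lia.
  - intros x y k Hk. now apply (dist_le_walk Hd), convex_embedding_walk.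
Qed.

Lemma convex_embedding_partial_cube : partial_cube G -> partial_cube H.
Proof.
  intros (I & f & Hf)%partial_cube_embedding.
  apply cube_embedding_partial_cube with I (fun x => f (phi x)). exact (convex_embedding_dist _ Hf).
Qed.

Lemma convex_img S : convex H S <-> convex G (img phi S).
Proof.
  split.
  - intros HS a b w (x & Hx & <-) (y & Hy & <-) Hi.
    destruct (interval_in_image _ _ _ Hi) as [z <-]. exists z. split; auto.
    apply (HS x y z); auto. now apply convex_embedding_interval.
  - intros HS x y z Hx Hy Hi. apply convex_embedding_interval in Hi.
    destruct (HS (phi x) (phi y) (phi z)) as (z' & Hz' & E%convex_embedding_inj);
      [exists x | exists y | |]; auto.
    now subst.
Qed.

Lemma convex_preimage B : convex G B -> convex H (fun v => B (phi v)).
Proof. intros HB x y z Hx Hy Hi%convex_embedding_interval. exact (HB _ _ _ Hx Hy Hi). Qed.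

Lemma hull_img X z : hull H X z <-> hull G (img phi X) (phi z).
Proof.
  split.
  - intros Hz B HB Hs. apply (Hz (fun v => B (phi v))); [now apply convex_preimage|].
    intros v Hv. apply Hs. now exists v.
  - intros Hz B HB Hs. destruct (Hz (img phi B)) as (z' & Hz' & E%convex_embedding_inj).
    + now apply convex_img.
    + intros w (x & Hx & <-). exists x. auto.
    + now subst.
Qed.

Lemma hull_in_image X w : hull G (img phi X) w -> exists z, phi z = w.
Proof.
  intros Hw. apply (Hw (fun w => exists x, phi x = w)); [apply Hc|].
  intros v (x & _ & <-). eauto.
Qed.

Lemma Iset_img X z : Iset H X z <-> Iset G (img phi X) (phi z).
Proof.
  split.
  - intros (x & y & Hx & Hy & Hi). exists (phi x), (phi y).
    repeat split; [now exists x | now exists y | now apply convex_embedding_interval].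
  - intros (a & b & (x & Hx & <-) & (y & Hy & <-) & Hi). exists x, y.
    repeat split; auto. now apply convex_embedding_interval.
Qed.

Lemma copoint_in_img S C x : copoint_in H S C x -> copoint_in G (img phi S) (img phi C) (phi x).
Proof.
  intros (HCS & HC & Cx & Hmax). repeat split.
  - intros w (u & Cu & <-). exists u. auto.
  - now apply convex_img.
  - intros (u & Cu & E%convex_embedding_inj). now subst.
  - intros D HDS HD Dx HCD w Dw. destruct (HDS _ Dw) as (u & Su & <-). exists u. split; auto.
    apply (Hmax (fun v => D (phi v))); auto.
    + intros v Dv. destruct (HDS _ Dv) as (u' & Hu' & E%convex_embedding_inj). now subst.
    + now apply convex_preimage.
    + intros c Cc. apply HCD. now exists c.
Qed.

Lemma copoint_in_preimage S C' x : copoint_in G (img phi S) C' (phi x) ->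
  copoint_in H S (fun v => C' (phi v)) x.
Proof.
  intros (HCS & HC & Cx & Hmax). repeat split; auto.
  - intros v Hv. destruct (HCS _ Hv) as (v' & Hv' & E%convex_embedding_inj). now subst.
  - now apply convex_preimage.
  - intros D HDS HD Dx HCD v Dv. apply (Hmax (img phi D)).
    + intros w (u & Du & <-). exists u. auto.
    + now apply convex_img.
    + intros (u & Du & E%convex_embedding_inj). now subst.
    + intros c Cc. destruct (HCS _ Cc) as (u & _ & <-). exists u. split; auto.
    + now exists v.
Qed.

Lemma ph_le1_on_pullback S : ph_le1_on G (img phi S) -> ph_le1_on H S.
Proof.
  intros Hph x C Sx HC z Hz. apply Iset_img.
  apply (Iset_ext (add1 G (img phi C) (phi x))); [apply img_add1|].
  apply (Hph (phi x) (img phi C)); [now exists x | now apply copoint_in_img|].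
  apply (hull_ext (img phi (add1 H C x))); [intros w; symmetry; apply img_add1|].
  now apply hull_img.
Qed.

Lemma ph_le1_on_img S : ph_le1_on H S -> ph_le1_on G (img phi S).
Proof.
  intros Hph x' C' (x & Sx & <-) HC' w Hw.
  set (C := fun v => C' (phi v)).
  assert (E : set_eq (add1 G C' (phi x)) (img phi (add1 H C x))).
  { intros u. transitivity (add1 G (img phi C) (phi x) u); [|apply img_add1].
    split.
    - intros [Hu | ->]; [left | now right]. destruct (proj1 HC' _ Hu) as (v & _ & <-). now exists v.
    - intros [(v & Hv & <-) | ->]; [now left | now right]. }
  apply hull_ext with (B := img phi (add1 H C x)) in Hw; [|exact E].
  destruct (hull_in_image _ _ Hw) as [z <-].
  apply (Iset_ext (img phi (add1 H C x))); [intros u; symmetry; apply E|].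
  apply Iset_img, (Hph x C Sx); [now apply copoint_in_preimage|]. now apply hull_img.
Qed.

End ConvexEmbedding.

Section FiniteSets.
Context {H G : Graph} {phi : V H -> V G} (Hc : convex_embedding H G phi).

Lemma finite_img S : finite_set H S -> finite_set G (img phi S).
Proof. intros (l & Hl). exists (map phi l). intros w (x & Hx & <-). now apply in_map, Hl. Qed.

Lemma finite_preimage T : finite_set G T -> finite_set H (fun v => T (phi v)).
Proof.
  intros (l & Hl).
  exists (flat_map (fun w => match excluded_middle_informative (exists x, phi x = w) with
                             | left h => [proj1_sig (constructive_indefinite_description _ h)]
                             | right _ => []
                             end) l).
  intros v Tv. apply in_flat_map. exists (phi v). split; [now apply Hl|].
  destruct (excluded_middle_informative _) as [h|n]; [|exfalso; eauto].
  destruct (constructive_indefinite_description _ h) as [x Hx]. simpl.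
  left. now apply (convex_embedding_inj Hc).
Qed.

End FiniteSets.

Definition induced_val (G : Graph) (S : vset G) : V (induced G S) -> V G := fun x => proj1_sig x.

Lemma induced_convex_embedding (G : Graph) (S : vset G) :
  convex G S -> convex_embedding (induced G S) G (induced_val G S).
Proof.
  intros HS. repeat split.
  - intros [x Hx] [y Hy] E. simpl in E. subst y. f_equal. apply proof_irrelevance.
  - exact (fun A => A).
  - exact (fun A => A).
  - intros a b w [[u Hu] <-] [[u' Hu'] <-] Hi. now exists (exist _ w (HS u u' w Hu Hu' Hi)).
Qed.

Lemma img_induced_val (G : Graph) (S : vset G) : set_eq (img (induced_val G S) (fun _ => True)) S.
Proof.
  intros v. split; [now intros ([x Hx] & _ & <-)|]. intros Hv. now exists (exist _ v Hv).
Qed.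

Lemma ph_le1_induced (G : Graph) (S : vset G) : convex G S -> ph_le1 (induced G S) <-> ph_le1_on G S.
Proof.
  intros HS. pose proof (induced_convex_embedding G S HS) as Hc. rewrite ph_le1_iff. split.
  - intros H. apply (ph_le1_on_ext _ _ _ (img_induced_val G S)). now apply (ph_le1_on_img Hc).
  - intros H. apply (ph_le1_on_pullback Hc).
    apply (ph_le1_on_ext _ S); [intros v; symmetry; apply img_induced_val | exact H].
Qed.

Lemma ph_homogeneous_iff (G : Graph) :
  ph_homogeneous G <-> forall S, convex G S -> finite_set G S -> ph_le1_on G S.
Proof. split; intros H S HS Hfin; apply ph_le1_induced; auto. Qed.

Lemma convex_embedding_ph_homogeneous (H G : Graph) phi :
  convex_embedding H G phi -> ph_homogeneous G -> ph_homogeneous H.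
Proof.
  intros Hc HG. apply ph_homogeneous_iff. intros S HS Hfin.
  apply (ph_le1_on_pullback Hc), ph_homogeneous_iff; auto.
  - now apply (convex_img Hc).
  - now apply finite_img.
Qed.

Lemma ph_le1_on_in_image (H G : Graph) phi :
  convex_embedding H G phi -> ph_homogeneous H ->
  forall T, convex G T -> finite_set G T -> subset G T (fun w => exists x, phi x = w) -> ph_le1_on G T.
Proof.
  intros Hc HH T HT Hfin HTim.
  apply (ph_le1_on_ext _ (img phi (fun v => T (phi v)))).
  - intros w. split; [now intros (x & Hx & <-)|].
    intros Tw. destruct (HTim w Tw) as [x <-]. now exists x.
  - apply (ph_le1_on_img Hc), ph_homogeneous_iff; auto.
    + now apply (convex_preimage Hc).
    + now apply (finite_preimage Hc).
Qed.

Lemma ph_le1_on_in_convex_part (G : Graph) (A : vset G) :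
  convex G A -> ph_homogeneous (induced G A) ->
  forall T, convex G T -> finite_set G T -> subset G T A -> ph_le1_on G T.
Proof.
  intros HA Hph T HT Hfin HTA.
  apply (ph_le1_on_in_image _ _ _ (induced_convex_embedding G A HA) Hph T HT Hfin).
  intros w Tw. now exists (exist _ w (HTA w Tw)).
Qed.

Lemma convex_embedding_ph_hom_partial_cube (H G : Graph) phi :
  convex_embedding H G phi -> ph_hom_partial_cube G -> ph_hom_partial_cube H.
Proof.
  intros Hc [HG HGph]. split.
  - exact (convex_embedding_partial_cube Hc HG).
  - exact (convex_embedding_ph_homogeneous H G phi Hc HGph).
Qed.

Lemma graph_iso_sym (H G : Graph) : graph_iso H G -> graph_iso G H.
Proof.
  intros (f & Hinj & Hsurj & Hadj).
  set (g := fun y => proj1_sig (constructive_indefinite_description _ (Hsurj y))).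
  assert (Hfg : forall y, f (g y) = y)
    by (intros y; unfold g; now destruct (constructive_indefinite_description _ _)).
  exists g. repeat split.
  - intros y y' E. now rewrite <- (Hfg y), <- (Hfg y'), E.
  - intros x. exists (f x). apply Hinj, Hfg.
  - intros A. apply Hadj. now rewrite !Hfg.
  - intros A%Hadj. now rewrite !Hfg in A.
Qed.

Lemma graph_iso_ph_hom_partial_cube (H G : Graph) :
  graph_iso H G -> ph_hom_partial_cube H -> ph_hom_partial_cube G.
Proof.
  intros (f & Hinj & Hsurj & Hadj)%graph_iso_sym. apply convex_embedding_ph_hom_partial_cube with f.
  split; [exact Hinj|]. split; [exact Hadj|]. intros a b w _ _ _. apply Hsurj.
Qed.

Lemma convex_subgraph_ph_hom_partial_cube (G : Graph) (S : vset G) :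
  ph_hom_partial_cube G -> convex G S -> ph_hom_partial_cube (induced G S).
Proof.
  intros HG HS. exact (convex_embedding_ph_hom_partial_cube _ _ _ (induced_convex_embedding G S HS) HG).
Qed.

(** * Cartesian products *)

Section CartesianProduct.
Context {I : Type} {F : I -> Graph}.

Definition upd (x : V (cart_prod I F)) (i : I) (a : V (F i)) : V (cart_prod I F) :=
  fun k => match eqdec k i with left E => eq_rect_r (fun k => V (F k)) a E | right _ => x k end.

Lemma upd_eq x i a : upd x i a i = a.
Proof.
  unfold upd. destruct (eqdec i i) as [E|n]; [|congruence].
  now rewrite (proof_irrelevance _ E eq_refl).
Qed.

Lemma upd_neq x i a k : k <> i -> upd x i a k = x k.
Proof. intros H. unfold upd. now destruct (eqdec k i). Qed.

Lemma upd_upd x i a a' : upd (upd x i a) i a' = upd x i a'.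
Proof.
  apply functional_extensionality_dep. intros k.
  destruct (eqdec k i) as [->|n]; [now rewrite !upd_eq | now rewrite !upd_neq].
Qed.

Lemma upd_same x i : upd x i (x i) = x.
Proof.
  apply functional_extensionality_dep. intros k.
  destruct (eqdec k i) as [->|n]; [now rewrite !upd_eq | now rewrite !upd_neq].
Qed.

Lemma adj_upd x i a : adj (F i) (x i) a -> adj (cart_prod I F) x (upd x i a).
Proof.
  intros A. exists i. rewrite upd_eq. split; [assumption|]. intros j Hj. now rewrite upd_neq.
Qed.

Lemma walk_upd i n (a0 a : V (F i)) : walk (F i) n a0 a ->
  forall x, x i = a0 -> walk (cart_prod I F) n x (upd x i a).
Proof.
  induction 1 as [a0|n a0 a1 a A _ IH]; intros x Hx.
  - subst. rewrite upd_same. constructor.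
  - econstructor; [apply (adj_upd x i a1); now rewrite Hx|].
    rewrite <- (upd_upd x i a1 a). apply IH, upd_eq.
Qed.

Variable b : V (cart_prod I F).
Hypothesis Hconn : forall i, connected (F i).

Definition reachable (x : V (cart_prod I F)) : Prop := exists n, walk (cart_prod I F) n b x.

Lemma reachable_upd x i a : reachable x -> reachable (upd x i a).
Proof.
  intros [n Hn]. destruct (Hconn i (x i) a) as [m Hm]. exists (n + m).
  eapply walk_app; [eassumption|]. now apply (walk_upd i _ (x i)).
Qed.

Lemma reachable_finite_diff x : reachable x -> exists L, forall i, x i <> b i -> In i L.
Proof.
  intros [n Hw]. apply walk_rev in Hw. induction Hw as [x|n x y z (i & _ & Hi) _ (L & HL)].
  - exists []. intros i H. congruence.
  - exists (i :: L). intros j Hj. destruct (eqdec j i) as [->|n']; [now left|].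
    right. apply HL. now rewrite <- Hi.
Qed.

Lemma finite_diff_reachable L : forall x, (forall i, x i <> b i -> In i L) -> reachable x.
Proof.
  induction L as [|i L IH]; intros x H.
  - replace x with b
      by (apply functional_extensionality_dep; intros i; apply NNPP; intros n; now apply (H i)).
    exists 0. constructor.
  - rewrite <- (upd_same x i), <- (upd_upd x i (b i)). apply reachable_upd, IH.
    intros j Hj. destruct (eqdec j i) as [->|n].
    + now rewrite upd_eq in Hj.
    + rewrite upd_neq in Hj by assumption. destruct (H j Hj); [congruence | assumption].
Qed.

Lemma weak_prod_iso_cart_prod : finite_type I -> graph_iso (weak_prod I F b) (cart_prod I F).
Proof.
  intros [L HL]. exists (fun v => proj1_sig v). repeat split.
  - intros [x Hx] [y Hy] E. simpl in E. subst y. f_equal. apply proof_irrelevance.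
  - intros x. exists (exist _ x (finite_diff_reachable L x (fun i _ => HL i))). reflexivity.
  - exact (fun A => A).
  - exact (fun A => A).
Qed.

End CartesianProduct.

Section WeakProduct.
Context {I : Type} {F : I -> Graph} {J : I -> Type} {f : forall i, V (F i) -> V (hypercube (J i))}.
Hypothesis Hf : forall i, cube_embedding (F i) (J i) (f i).
Hypothesis Hph : forall i, ph_homogeneous (F i).
Variable b : V (cart_prod I F).

Notation W := (weak_prod I F b).

Definition coord (v : V W) (i : I) : V (F i) := proj1_sig v i.

Definition set_coord (v : V W) i a : V W :=
  exist _ (upd (proj1_sig v) i a)
    (reachable_upd b (fun i => is_dist_connected (Hf i)) _ i a (proj2_sig v)).

Lemma coord_set_coord_eq v i a : coord (set_coord v i a) i = a.
Proof. apply upd_eq. Qed.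

Lemma coord_set_coord_neq v i a k : k <> i -> coord (set_coord v i a) k = coord v k.
Proof. apply upd_neq. Qed.

Lemma weak_prod_ext (v w : V W) : (forall i, coord v i = coord w i) -> v = w.
Proof.
  destruct v as [x Hx], w as [y Hy]. unfold coord; simpl. intros H.
  assert (x = y) as <- by (now apply functional_extensionality_dep).
  f_equal. apply proof_irrelevance.
Qed.

Lemma adj_set_coord v i a : adj (F i) (coord v i) a -> adj W v (set_coord v i a).
Proof. apply adj_upd. Qed.

Definition weak_bits (x : V (cart_prod I F)) (p : {i & J i}) : bool :=
  xorb (bits (f (projT1 p) (x (projT1 p))) (projT2 p)) (bits (f (projT1 p) (b (projT1 p))) (projT2 p)).

Lemma weak_bits_finite_support (v : V W) : finite_support {i & J i} (weak_bits (proj1_sig v)).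
Proof.
  destruct v as [x Hx]. destruct (reachable_finite_diff b x Hx) as [L HL]. simpl.
  exists (flat_map (fun i => map (existT J i) (supp (f i (x i)) ++ supp (f i (b i)))) L).
  intros [i j] H. unfold weak_bits in H; simpl in H. apply in_flat_map. exists i. split.
  - apply HL. intros E. rewrite E, xorb_nilpotent in H. discriminate.
  - apply in_map, in_or_app.
    destruct (bits (f i (x i)) j) eqn:E; [left | right]; apply supp_spec; auto.
Qed.

(* Bits are taken relative to the base point b, which makes the support finite. *)
Definition weak_embed (v : V W) : V (hypercube {i & J i}) :=
  exist _ (weak_bits (proj1_sig v)) (weak_bits_finite_support v).

Lemma bits_weak_embed v i j :
  bits (weak_embed v) (existT J i j) = xorb (bits (f i (coord v i)) j) (bits (f i (b i)) j).
Proof. reflexivity. Qed.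

Lemma weak_embed_adj v w : adj W v w -> ham (weak_embed v) (weak_embed w) <= 1.
Proof.
  intros (i & A & Hother). destruct (adj_one_bit (Hf i) _ _ A) as (e & _ & He).
  apply ham_le1 with (existT J i e). intros [k j] H. rewrite !bits_weak_embed in H.
  destruct (eqdec k i) as [->|n].
  - rewrite xorb_cancel_r in H. apply He in H. now subst.
  - unfold coord in H. rewrite Hother in H by assumption. contradiction.
Qed.

Lemma weak_embed_inj v w : ham (weak_embed v) (weak_embed w) = 0 -> v = w.
Proof.
  intros H. apply weak_prod_ext. intros i. apply (cube_embedding_bits_inj (Hf i)). intros j.
  apply ham_eq0 with (i := existT J i j) in H. now rewrite !bits_weak_embed, xorb_cancel_r in H.
Qed.

Lemma weak_embed_step v w : 0 < ham (weak_embed v) (weak_embed w) ->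
  exists v', adj W v v' /\ ham (weak_embed v') (weak_embed w) < ham (weak_embed v) (weak_embed w).
Proof.
  intros Hpos. assert (Hne : v <> w) by (intros ->; rewrite (dist_refl hypercube_dist) in Hpos; lia).
  assert (Hi : exists i, coord v i <> coord w i)
    by (apply NNPP; intros Hno; apply Hne, weak_prod_ext; intros i; apply NNPP; eauto).
  destruct Hi as [i Hi].
  destruct (step_toward (Hf i) _ _ Hi) as (u & e & A & He & Hu & Hue).
  exists (set_coord v i u). split; [now apply adj_set_coord|].
  apply ham_lt with (existT J i e); rewrite ?bits_weak_embed, ?coord_set_coord_eq, ?xorb_cancel_r.
  - intros [k j] Hk. rewrite !bits_weak_embed in Hk. destruct (eqdec k i) as [->|n].
    + rewrite coord_set_coord_eq, xorb_cancel_r in Hk. rewrite (Hu j); auto.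
    + now rewrite coord_set_coord_neq in Hk.
  - exact Hue.
  - congruence.
Qed.

Lemma weak_embed_cube_embedding : cube_embedding W {i & J i} weak_embed.
Proof.
  apply cube_embedding_of; [exact weak_embed_adj | exact weak_embed_inj | exact weak_embed_step].
Qed.

Lemma interval_weak_prod v w z :
  interval W v w z <-> forall i, interval (F i) (coord v i) (coord w i) (coord z i).
Proof.
  rewrite (interval_bits weak_embed_cube_embedding). split.
  - intros H i. apply (interval_bits (Hf i)). intros j.
    specialize (H (existT J i j)). now rewrite !bits_weak_embed, !xorb_cancel_r in H.
  - intros H [i j]. specialize (H i). rewrite (interval_bits (Hf i)) in H.
    now rewrite !bits_weak_embed, !xorb_cancel_r.
Qed.

Lemma convex_coord_preimage k (B : vset (F k)) : convex (F k) B -> convex W (fun v => B (coord v k)).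
Proof. intros HB v w z Hv Hw Hi. rewrite interval_weak_prod in Hi. exact (HB _ _ _ Hv Hw (Hi k)). Qed.

Lemma interval_set_coord x z k a :
  interval (F k) (coord x k) a (coord z k) -> interval W x (set_coord z k a) z.
Proof.
  intros H. apply interval_weak_prod. intros i. destruct (eqdec i k) as [->|n].
  - now rewrite coord_set_coord_eq.
  - rewrite coord_set_coord_neq by assumption. apply (interval_r (Hf i)).
Qed.

Lemma convex_set_coord (S : vset W) k s s' : convex W S -> S s -> S s' -> S (set_coord s k (coord s' k)).
Proof.
  intros HS Hs Hs'. apply (HS s s'); auto. apply interval_weak_prod. intros i.
  destruct (eqdec i k) as [->|n].
  - rewrite coord_set_coord_eq. apply (interval_r (Hf k)).
  - rewrite coord_set_coord_neq by assumption. apply (interval_l (Hf i)).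
Qed.

Definition coord_img (S : vset W) (k : I) : vset (F k) := fun a => exists s, S s /\ coord s k = a.

Lemma coord_img_convex S k : convex W S -> convex (F k) (coord_img S k).
Proof.
  intros HS a a' t (s & Hs & <-) (s' & Hs' & <-) Ht.
  exists (set_coord s k t). split; [|apply coord_set_coord_eq].
  apply (HS s (set_coord s k (coord s' k))); [auto | now apply convex_set_coord|].
  apply interval_weak_prod. intros i. destruct (eqdec i k) as [->|n].
  - now rewrite !coord_set_coord_eq.
  - rewrite !coord_set_coord_neq by assumption. apply (interval_l (Hf i)).
Qed.

Lemma coord_img_finite S k : finite_set W S -> finite_set (F k) (coord_img S k).
Proof.
  intros [l Hl]. exists (map (fun s => coord s k) l).
  intros a (s & Hs & <-). exact (in_map (fun s => coord s k) l s (Hl s Hs)).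
Qed.

Lemma coord_img_copoint S C x k j : convex W S -> S x -> copoint_in W S C x ->
  (forall v, C v <-> S v /\ bits (f k (coord v k)) j = negb (bits (f k (coord x k)) j)) ->
  copoint_in (F k) (coord_img S k)
    (fun a => coord_img S k a /\ bits (f k a) j = negb (bits (f k (coord x k)) j)) (coord x k).
Proof.
  intros HS Sx (_ & _ & _ & Hmax) HC. split; [|split; [|split]].
  - now intros a [Ha _].
  - apply convex_inter; [now apply coord_img_convex | apply (halfspace_convex (Hf k))].
  - intros [_ H]. now destruct (bits (f k (coord x k)) j).
  - intros D HDS HD Dx HCD a Da. destruct (HDS a Da) as (s & Hs & <-).
    assert (Cx : C (set_coord x k (coord s k))).
    { apply (Hmax (fun v => S v /\ D (coord v k))).
      - now intros v [Hv _].
      - apply convex_inter; [assumption | now apply convex_coord_preimage].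
      - now intros [_ Dx'].
      - intros c Cc. apply HC in Cc as [Sc Hc]. split; [exact Sc|].
        apply HCD. split; [now exists c | exact Hc].
      - split; [now apply convex_set_coord | now rewrite coord_set_coord_eq]. }
    apply HC in Cx as [_ Cx]. rewrite coord_set_coord_eq in Cx. split; [now exists s | exact Cx].
Qed.

Lemma weak_prod_ph_le1_on S : convex W S -> finite_set W S -> ph_le1_on W S.
Proof.
  intros HS Hfin x C Sx HC z Hz.
  destruct (classic (exists c0, C c0)) as [[c0 Cc0]|Hno].
  2:{ apply hull_add1_empty in Hz as ->; [apply subset_Iset; now right | eauto]. }
  destruct (copoint_halfspace weak_embed_cube_embedding S C x c0 HS Sx HC Cc0) as [[k j] Hk].
  assert (HCk : forall v, C v <-> S v /\ bits (f k (coord v k)) j = negb (bits (f k (coord x k)) j))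
    by (intros v; now rewrite Hk, !bits_weak_embed, xorb_cancel_negb).
  set (Ck := fun a => coord_img S k a /\ bits (f k a) j = negb (bits (f k (coord x k)) j)).
  assert (Ck_conv : convex (F k) Ck)
    by (apply convex_inter; [now apply coord_img_convex | apply (halfspace_convex (Hf k))]).
  assert (Hzk : S z /\ hull (F k) (add1 (F k) Ck (coord x k)) (coord z k)).
  { refine (hull_smallest _ (fun v => S v /\ hull (F k) (add1 (F k) Ck (coord x k)) (coord v k))
              _ _ z Hz).
    - apply convex_inter; [assumption | apply convex_coord_preimage, hull_convex].
    - intros v [Cv | ->]; split.
      + apply HC, Cv.
      + apply subset_hull. left. split; [exists v; split; [apply HC, Cv | reflexivity] | apply HCk, Cv].
      + assumption.
      + apply subset_hull. now right. }
  destruct Hzk as [Sz Hzk].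
  assert (Hphk : ph_le1_on (F k) (coord_img S k))
    by (apply ph_homogeneous_iff; [apply Hph | now apply coord_img_convex | now apply coord_img_finite]).
  apply (Hphk (coord x k) Ck) in Hzk; [|now exists x | now apply (coord_img_copoint S C x k j)].
  destruct (Iset_add1_cases (Hf k) Ck (coord x k) (coord z k) (coord c0 k)) as [Cz | (a & Ca & Hi)];
    auto.
  - destruct (proj1 (HCk c0) Cc0) as [Sc0 Hc0]. split; [now exists c0 | exact Hc0].
  - apply subset_Iset. left. apply HCk. split; [assumption | apply Cz].
  - destruct Ca as [(s & Hs & <-) Hsk]. apply Iset_add1_interval_set.
    exists (set_coord z k (coord s k)). split; [|now apply interval_set_coord].
    apply HCk. rewrite coord_set_coord_eq. split; [now apply convex_set_coord | assumption].
Qed.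

End WeakProduct.

Definition cube_embedding_sig (G : Graph) (HG : partial_cube G) :
  {I : Type & {f : V G -> V (hypercube I) | cube_embedding G I f}}.
Proof.
  destruct (constructive_indefinite_description _ (partial_cube_embedding G HG)) as [I HI].
  destruct (constructive_indefinite_description _ HI) as [f Hf].
  exact (existT _ I (exist _ f Hf)).
Defined.

Lemma weak_prod_ph_hom_partial_cube (I : Type) (F : I -> Graph) (b : V (cart_prod I F)) :
  (forall i, ph_hom_partial_cube (F i)) -> ph_hom_partial_cube (weak_prod I F b).
Proof.
  intros HF. set (E := fun i => cube_embedding_sig (F i) (proj1 (HF i))).
  assert (Hf : forall i, cube_embedding (F i) (projT1 (E i)) (proj1_sig (projT2 (E i))))
    by (intros i; exact (proj2_sig (projT2 (E i)))).
  split.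
  - exact (cube_embedding_partial_cube _ _ _ (weak_embed_cube_embedding Hf b)).
  - apply ph_homogeneous_iff, (weak_prod_ph_le1_on Hf). intros i. apply HF.
Qed.

Lemma empty_ph_hom_partial_cube (G : Graph) : ~ inhabited (V G) -> ph_hom_partial_cube G.
Proof.
  intros Hno. split.
  - apply cube_embedding_partial_cube with Empty_set (fun x => False_rect _ (Hno (inhabits x))).
    split; intros x; destruct (Hno (inhabits x)).
  - intros S _ _. exists 0. split; [lia|]. intros x. destruct (Hno (inhabits (proj1_sig x))).
Qed.

Lemma finite_prod_ph_hom_partial_cube (I : Type) (F : I -> Graph) :
  finite_type I -> (forall i, ph_hom_partial_cube (F i)) -> ph_hom_partial_cube (cart_prod I F).
Proof.
  intros HI HF. destruct (classic (inhabited (V (cart_prod I F)))) as [[b]|Hno].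
  - apply graph_iso_ph_hom_partial_cube with (weak_prod I F b).
    + apply weak_prod_iso_cart_prod; [|exact HI]. intros i. apply partial_cube_connected, HF.
    + now apply weak_prod_ph_hom_partial_cube.
  - now apply empty_ph_hom_partial_cube.
Qed.

(** * Gated amalgams *)

Section Gates.
Context {G : Graph} {I : Type} {f : V G -> V (hypercube I)} (Hf : cube_embedding G I f).
Variables S P : vset G.
Hypothesis HS : convex G S.
Hypothesis HP : convex G P.
Hypothesis HPS : subset G P S.
Variable pi : V G -> V G.
Hypothesis Hpi : forall s, S s -> P (pi s) /\ forall p, P p -> interval G s p (pi s).

Let d x y := ham (f x) (f y).

Lemma gate_id p : P p -> pi p = p.
Proof. intros Pp. apply interval_same, (proj2 (Hpi p (HPS p Pp)) p Pp). Qed.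

Lemma gate_dist s p : S s -> P p -> d s p = d s (pi s) + d (pi s) p.
Proof. intros Ss Pp. symmetry. apply (interval_dist Hf), (proj2 (Hpi s Ss) p Pp). Qed.

Lemma gate_bit_cases e :
  (forall s, S s -> bits (f (pi s)) e = bits (f s) e) \/
  (forall p p', P p -> P p' -> bits (f p) e = bits (f p') e).
Proof.
  destruct (classic (exists p p', P p /\ P p' /\ bits (f p) e <> bits (f p') e))
    as [(p & p' & Pp & Pp' & Hne)|Hno].
  - left. intros s Ss. destruct (Hpi s Ss) as [_ Hi].
    pose proof (proj1 (interval_bits Hf _ _ _) (Hi p Pp) e) as H1.
    pose proof (proj1 (interval_bits Hf _ _ _) (Hi p' Pp') e) as H2.
    destruct H1, H2; congruence.
  - right. intros p p' Pp Pp'. apply NNPP. intros Hne. apply Hno. now exists p, p'.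
Qed.

Lemma gate_interval s s' w : S s -> S s' -> interval G s s' w -> interval G (pi s) (pi s') (pi w).
Proof.
  intros Ss Ss' Hi. assert (Sw : S w) by now apply (HS s s' w).
  rewrite (interval_bits Hf) in Hi |- *. intros e. destruct (gate_bit_cases e) as [Hc|Hc].
  - rewrite !Hc by assumption. apply Hi.
  - left. apply Hc; apply Hpi; assumption.
Qed.

Lemma convex_gate_preimage B : convex G B -> convex G (fun s => S s /\ B (pi s)).
Proof.
  intros HB u v w [Su Bu] [Sv Bv] Hi. split; [now apply (HS u v w)|].
  apply (HB (pi u) (pi v)); auto. now apply gate_interval.
Qed.

Lemma convex_gate_between x : convex G (fun s => S s /\ interval G x (pi s) s).
Proof.
  intros u v w [Su Iu] [Sv Iv] Hi. assert (Sw : S w) by now apply (HS u v w). split; [assumption|].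
  rewrite (interval_bits Hf) in Iu, Iv, Hi |- *. intros e.
  destruct (gate_bit_cases e) as [Hc|Hc]; [right; symmetry; now apply Hc|].
  specialize (Iu e); specialize (Iv e); specialize (Hi e).
  assert (E1 : bits (f (pi u)) e = bits (f (pi w)) e) by (apply Hc; apply Hpi; assumption).
  assert (E2 : bits (f (pi v)) e = bits (f (pi w)) e) by (apply Hc; apply Hpi; assumption).
  destruct (bool_dec (bits (f w) e) (bits (f (pi w)) e)); [now right|]. left.
  destruct Hi as [Hi|Hi]; rewrite Hi in *; destruct Iu, Iv; congruence.
Qed.

Lemma copoint_in_gate_part C x c1 : S x -> copoint_in G S C x -> C c1 -> P c1 -> ~ C (pi x) ->
  copoint_in G P (fun v => C v /\ P v) (pi x).
Proof.
  intros Sx (HCS & HC & Cx & Hmax) Cc1 Pc1 nC.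
  assert (HCpi : forall c, C c -> C (pi c) /\ P (pi c)).
  { intros c Cc. destruct (Hpi c (HCS c Cc)) as [Pc Hi].
    split; [exact (HC c c1 _ Cc Cc1 (Hi c1 Pc1)) | exact Pc]. }
  split; [now intros v [_ Pv]|]. split; [now apply convex_inter|]. split; [now intros [Cpx _]|].
  intros D HDP HD Dx HCD v Dv. split; [|now apply HDP].
  apply (Hmax (fun s => S s /\ D (pi s))).
  - now intros s [Ss _].
  - now apply convex_gate_preimage.
  - now intros [_ Dpx].
  - intros c Cc. split; [now apply HCS | apply HCD, HCpi, Cc].
  - split; [now apply HPS, HDP | now rewrite gate_id by now apply HDP].
Qed.

(* The gate map sends hull(C + x) into hull((C n P) + pi x), where the pre-hull property of P applies. *)
Lemma gate_hull_cases C x c1 z : ph_le1_on G P -> S x -> copoint_in G S C x -> C c1 -> P c1 ->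
  ~ C (pi x) -> hull G (add1 G C x) z ->
  C (pi z) \/ exists c, C c /\ P c /\ interval G (pi x) c (pi z).
Proof.
  intros HPph Sx HCop Cc1 Pc1 nC Hz.
  pose proof (copoint_in_gate_part C x c1 Sx HCop Cc1 Pc1 nC) as HCP.
  destruct HCop as (HCS & HC & _ & _).
  set (CP := fun v => C v /\ P v).
  assert (Hpz : hull G (add1 G CP (pi x)) (pi z)).
  { refine (proj2 (hull_smallest _ (fun s => S s /\ hull G (add1 G CP (pi x)) (pi s)) _ _ z Hz)).
    - apply convex_gate_preimage, hull_convex.
    - intros v [Cv | ->]; split.
      + now apply HCS.
      + apply subset_hull. left. destruct (Hpi v (HCS v Cv)) as [Pv Hv].
        split; [exact (HC v c1 _ Cv Cc1 (Hv c1 Pc1)) | exact Pv].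
      + assumption.
      + apply subset_hull. now right. }
  apply (HPph (pi x) CP) in Hpz; [|apply Hpi; assumption | exact HCP].
  destruct (Iset_add1_cases Hf CP (pi x) (pi z) c1) as [[Cpz _] | (c & [Cc Pc] & Hc)];
    [exact (proj1 (proj2 HCP)) | now split | exact Hpz | now left | right].
  now exists c.
Qed.

Lemma gate_part_interval_set C x c1 z : ph_le1_on G P -> S x -> copoint_in G S C x -> C c1 -> P c1 ->
  ~ C (pi x) -> hull G (add1 G C x) z -> P z -> ~ C z -> interval_set G x C z.
Proof.
  intros HPph Sx HC Cc1 Pc1 nC Hz Pz nCz.
  destruct (gate_hull_cases C x c1 z HPph Sx HC Cc1 Pc1 nC Hz) as [Cz | (c & Cc & Pc & Hi)];
    rewrite (gate_id z Pz) in *; [contradiction|].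
  exists c. split; [assumption|]. apply (interval_dist Hf) in Hi. apply (interval_dist Hf).
  pose proof (gate_dist x c Sx Pc). pose proof (gate_dist x z Sx Pz). unfold d in *. lia.
Qed.

Lemma copoint_in_gate_part_interval_set C x c1 z : ph_le1_on G P -> S x -> copoint_in G S C x ->
  subset G C P -> C c1 -> ~ C (pi x) -> hull G (add1 G C x) z -> interval_set G x C z.
Proof.
  intros HPph Sx HC HCP Cc1 nC Hz.
  assert (Hzx : S z /\ interval G x (pi z) z).
  { refine (hull_smallest _ (fun s => S s /\ interval G x (pi s) s) (convex_gate_between x) _ z Hz).
    intros v [Cv | ->]; split; [apply HC, Cv | | exact Sx | apply (interval_l Hf)].
    rewrite gate_id by now apply HCP. apply (interval_r Hf). }
  destruct Hzx as [Sz Hzx].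
  destruct (gate_hull_cases C x c1 z HPph Sx HC Cc1 (HCP c1 Cc1) nC Hz) as [Cpz | (c & Cc & Pc & Hi)].
  - exists (pi z). split; assumption.
  - exists c. split; [assumption|]. apply (interval_dist Hf) in Hi, Hzx. apply (interval_dist Hf).
    assert (Ppz : P (pi z)) by now apply Hpi.
    pose proof (gate_dist x c Sx Pc). pose proof (gate_dist x (pi z) Sx Ppz).
    pose proof (gate_dist z c Sz Pc). unfold d in *. lia.
Qed.

End Gates.

Lemma gate_restrict (G : Graph) (S Q : vset G) (piQ : V G -> V G) : convex G S ->
  (forall v, Q (piQ v) /\ forall a, Q a -> interval G v a (piQ v)) ->
  forall p0, S p0 -> Q p0 ->
  forall s, S s -> (S (piQ s) /\ Q (piQ s)) /\ forall p, S p /\ Q p -> interval G s p (piQ s).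
Proof.
  intros HS Hg p0 Sp0 Qp0 s Ss. destruct (Hg s) as [Hq Hi].
  split; [split; [apply (HS s p0); auto | exact Hq] | intros p [_ Qp]; auto].
Qed.

Lemma ph_le1_on_inter (G : Graph) (Q S : vset G) :
  (forall T, convex G T -> finite_set G T -> subset G T Q -> ph_le1_on G T) ->
  convex G Q -> convex G S -> finite_set G S -> ph_le1_on G (fun v => S v /\ Q v).
Proof.
  intros HphQ HQ HS [l Hl]. apply HphQ; [now apply convex_inter | | now intros v [_ Qv]].
  exists l. intros v [Sv _]. now apply Hl.
Qed.

Section GatedCover.
Context {G : Graph} {I : Type} {f : V G -> V (hypercube I)} (Hf : cube_embedding G I f).
Variables (A B : vset G) (piA piB : V G -> V G) (o : V G).
Hypothesis HA : convex G A.
Hypothesis HB : convex G B.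
Hypothesis HgA : forall v, A (piA v) /\ forall a, A a -> interval G v a (piA v).
Hypothesis HgB : forall v, B (piB v) /\ forall a, B a -> interval G v a (piB v).
Hypothesis HoA : A o.
Hypothesis HoB : B o.
Hypothesis Hcover : forall v, A v \/ B v.
Hypothesis HphA : forall T, convex G T -> finite_set G T -> subset G T A -> ph_le1_on G T.
Hypothesis HphB : forall T, convex G T -> finite_set G T -> subset G T B -> ph_le1_on G T.

Lemma gate_id_global (Q : vset G) piQ :
  (forall v, Q (piQ v) /\ forall a, Q a -> interval G v a (piQ v)) ->
  forall a, Q a -> piQ a = a.
Proof. intros Hg a Qa. apply interval_same, (proj2 (Hg a) a Qa). Qed.

Lemma gated_cover_interval_set_A S C x z c0 : convex G S -> finite_set G S -> S x -> A x ->
  copoint_in G S C x -> C c0 -> hull G (add1 G C x) z -> A z -> ~ C z -> interval_set G x C z.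
Proof.
  intros HS Hfin Sx Ax HC Cc0 Hz Az nCz.
  assert (Sz : S z) by (apply (hull_add1_subset S C x); auto; apply HC).
  destruct (classic (exists c1, C c1 /\ A c1)) as [(c1 & Cc1 & Ac1) | HnA].
  - refine (gate_part_interval_set Hf S (fun v => S v /\ A v) HS (convex_inter _ _ HS HA)
              (fun p Hp => proj1 Hp) piA (gate_restrict G S A piA HS HgA x Sx Ax) C x c1 z
              _ Sx HC Cc1 (conj (proj1 HC c1 Cc1) Ac1) _ Hz (conj Sz Az) nCz).
    + exact (ph_le1_on_inter G A S HphA HA HS Hfin).
    + rewrite (gate_id_global A piA HgA x Ax). apply HC.
  - assert (HCB : subset G C (fun v => S v /\ B v)).
    { intros v Cv. split; [now apply HC|]. destruct (Hcover v); [exfalso; eauto | assumption]. }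
    refine (copoint_in_gate_part_interval_set Hf S (fun v => S v /\ B v) HS (convex_inter _ _ HS HB)
              (fun p Hp => proj1 Hp) piB (gate_restrict G S B piB HS HgB c0 (proj1 (HCB c0 Cc0))
              (proj2 (HCB c0 Cc0))) C x c0 z (ph_le1_on_inter G B S HphB HB HS Hfin) Sx HC HCB Cc0 _ Hz).
    intros Cpx. apply HnA. exists (piB x). split; [exact Cpx|].
    apply (HA x o); [exact Ax | exact HoA | apply HgB, HoB].
Qed.

Lemma gated_cover_hull_Iset S C x z : convex G S -> finite_set G S -> S x -> A x ->
  copoint_in G S C x -> hull G (add1 G C x) z -> Iset G (add1 G C x) z.
Proof.
  intros HS Hfin Sx Ax HC Hz.
  destruct (classic (exists c0, C c0)) as [[c0 Cc0] | Hno].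
  2:{ apply hull_add1_empty in Hz as ->; [apply subset_Iset; now right | eauto]. }
  destruct (classic (C z)) as [Cz | nCz]; [apply subset_Iset; now left|].
  apply Iset_add1_interval_set.
  assert (Sz : S z) by (apply (hull_add1_subset S C x); auto; apply HC).
  destruct (Hcover z) as [Az | Bz]; [now apply (gated_cover_interval_set_A S C x z c0)|].
  destruct (classic (exists c1, C c1 /\ B c1)) as [(c1 & Cc1 & Bc1) | HnB].
  2:{ apply (gated_cover_interval_set_A S C x z c0); auto.
      apply (hull_add1_subset A C x); auto.
      intros v Cv. destruct (Hcover v); [assumption | exfalso; eauto]. }
  set (PB := fun v => S v /\ B v).
  assert (HgSB := gate_restrict G S B piB HS HgB c1 (proj1 HC c1 Cc1) Bc1).
  destruct (classic (C (piB x))) as [Cpx | nCpx].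
  - exfalso. apply nCz.
    assert (Hpz : S z /\ C (piB z)).
    { refine (hull_smallest _ (fun s => S s /\ C (piB s))
                (convex_gate_preimage Hf S PB HS piB HgSB C (proj1 (proj2 HC))) _ z Hz).
      intros v [Cv | ->]; split; [apply HC, Cv | | exact Sx | exact Cpx].
      apply (proj1 (proj2 HC) v c1 _ Cv Cc1), HgB, Bc1. }
    rewrite (gate_id_global B piB HgB z Bz) in Hpz. apply Hpz.
  - exact (gate_part_interval_set Hf S PB HS (convex_inter _ _ HS HB) (fun p Hp => proj1 Hp) piB HgSB
             C x c1 z (ph_le1_on_inter G B S HphB HB HS Hfin) Sx HC Cc1 (conj (proj1 HC c1 Cc1) Bc1)
             nCpx Hz (conj Sz Bz) nCz).
Qed.

End GatedCover.

Lemma gated_convex (G : Graph) d (Hd : is_dist G d) (A : vset G) : gated G A -> convex G A.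
Proof.
  intros HA x y z Hx Hy Hi. destruct (HA z) as (g & Ag & Hg).
  pose proof (proj1 (interval_dist Hd _ _ _) (Hg x Hx)).
  pose proof (proj1 (interval_dist Hd _ _ _) (Hg y Hy)).
  apply (interval_dist Hd) in Hi.
  pose proof (dist_triangle Hd x g y). rewrite (dist_sym Hd x z) in Hi. rewrite (dist_sym Hd x g) in *.
  replace z with g; [exact Ag|]. apply (dist_eq0 Hd). rewrite (dist_sym Hd). lia.
Qed.

Definition gate_of (G : Graph) (A : vset G) (HA : gated G A) (x : V G) : V G :=
  proj1_sig (constructive_indefinite_description _ (HA x)).

Lemma gate_of_spec (G : Graph) (A : vset G) (HA : gated G A) (x : V G) :
  A (gate_of G A HA x) /\ forall a, A a -> interval G x a (gate_of G A HA x).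
Proof. unfold gate_of. now destruct (constructive_indefinite_description _ (HA x)). Qed.

Section GatedAmalgam.
Context {G : Graph} {A0 A1 : vset G} (HA0 : gated G A0) (HA1 : gated G A1) {o : V G}.
Hypothesis Ho0 : A0 o.
Hypothesis Ho1 : A1 o.
Hypothesis Hcover : forall v, A0 v \/ A1 v.
Hypothesis H0 : ph_hom_partial_cube (induced G A0).
Hypothesis H1 : ph_hom_partial_cube (induced G A1).

Let pi0 := gate_of G A0 HA0.
Let pi1 := gate_of G A1 HA1.

Lemma gated_amalgam_connected : connected G.
Proof.
  intros x y.
  destruct (gate_of_spec G A0 HA0 x) as [Hx Ix], (gate_of_spec G A0 HA0 y) as [Hy Iy].
  destruct (Ix _ Hx) as (n1 & m1 & W1 & _), (Iy _ Hy) as (n2 & m2 & W2 & _).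
  destruct (partial_cube_connected _ (proj1 H0) (exist _ _ Hx) (exist _ _ Hy)) as [m Wm].
  apply (walk_map _ _ (induced_val G A0)) in Wm; [|now intros].
  exists (n1 + (m + n2)). eapply walk_app; [exact W1|]. eapply walk_app; [exact Wm|]. now apply walk_rev.
Qed.

Let dd : V G -> V G -> nat :=
  proj1_sig (constructive_indefinite_description _ (connected_is_dist G gated_amalgam_connected)).

Lemma gated_amalgam_dist : is_dist G dd.
Proof. unfold dd. now destruct (constructive_indefinite_description _ _). Qed.

Let Hdd := gated_amalgam_dist.
Let A0_convex := gated_convex G dd Hdd A0 HA0.
Let A1_convex := gated_convex G dd Hdd A1 HA1.

Let pi0_spec v : A0 (pi0 v) /\ forall a, A0 a -> interval G v a (pi0 v) := gate_of_spec G A0 HA0 v.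
Let pi1_spec v : A1 (pi1 v) /\ forall a, A1 a -> interval G v a (pi1 v) := gate_of_spec G A1 HA1 v.

Lemma gate0_id a : A0 a -> pi0 a = a.
Proof. exact (gate_id_global A0 pi0 pi0_spec a). Qed.

Lemma gate1_id a : A1 a -> pi1 a = a.
Proof. exact (gate_id_global A1 pi1 pi1_spec a). Qed.

Lemma gate0_dist v a : A0 a -> dd v a = dd v (pi0 v) + dd (pi0 v) a.
Proof. intros Ha. symmetry. apply (interval_dist Hdd), pi0_spec, Ha. Qed.

Lemma gate0_in_A1 v : A1 v -> A1 (pi0 v).
Proof. intros Hv. apply (A1_convex v o); auto. apply pi0_spec, Ho0. Qed.

Let E0 := cube_embedding_sig (induced G A0) (proj1 H0).
Let E1 := cube_embedding_sig (induced G A1) (proj1 H1).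
Let g0 v := proj1_sig (projT2 E0) (exist _ (pi0 v) (proj1 (pi0_spec v))).
Let g1 v := proj1_sig (projT2 E1) (exist _ (pi1 v) (proj1 (pi1_spec v))).

Lemma ham_g0 v w : ham (g0 v) (g0 w) = dd (pi0 v) (pi0 w).
Proof.
  exact (is_dist_unique _ _ _ (proj2_sig (projT2 E0))
           (convex_embedding_dist (induced_convex_embedding G A0 A0_convex) dd Hdd) _ _).
Qed.

Lemma ham_g1 v w : ham (g1 v) (g1 w) = dd (pi1 v) (pi1 w).
Proof.
  exact (is_dist_unique _ _ _ (proj2_sig (projT2 E1))
           (convex_embedding_dist (induced_convex_embedding G A1 A1_convex) dd Hdd) _ _).
Qed.

Lemma interval_g1_bits a a' z : A1 a -> A1 a' -> A1 z ->
  interval G a a' z <-> forall j, bits (g1 z) j = bits (g1 a) j \/ bits (g1 z) j = bits (g1 a') j.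
Proof.
  intros Ha Ha' Hz. rewrite (interval_dist Hdd), <- ham_between, !ham_g1, !gate1_id by assumption.
  reflexivity.
Qed.

Lemma g1_bit_cases j :
  (forall u, A1 u -> bits (g1 (pi0 u)) j = bits (g1 u) j) \/
  (forall a a', A0 a -> A1 a -> A0 a' -> A1 a' -> bits (g1 a) j = bits (g1 a') j).
Proof.
  destruct (classic (exists a a', A0 a /\ A1 a /\ A0 a' /\ A1 a' /\ bits (g1 a) j <> bits (g1 a') j))
    as [(a & a' & Ha0 & Ha1 & Ha0' & Ha1' & Hne) | Hno].
  - left. intros u Hu.
    pose proof (proj2 (pi0_spec u) a Ha0) as I1. pose proof (proj2 (pi0_spec u) a' Ha0') as I2.
    rewrite interval_g1_bits in I1, I2 by (auto using gate0_in_A1).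
    destruct (I1 j), (I2 j); congruence.
  - right. intros a a' Ha0 Ha1 Ha0' Ha1'. apply NNPP. intros Hne. apply Hno. now exists a, a'.
Qed.

(* The second component compares v with its gate in A0, as seen from A1; it vanishes on A0. *)
Definition amalgam_embed (v : V G) : V (hypercube (projT1 E0 + projT1 E1)) :=
  cube_pair (g0 v) (cube_xor (g1 v) (g1 (pi0 v))).

Lemma ham_cube_xor_self {K : Type} (s t u : V (hypercube K)) :
  ham (cube_xor s s) (cube_xor t u) = ham t u.
Proof.
  rewrite (ham_add _ _ t u t t), (dist_refl hypercube_dist); [lia|].
  intros j. rewrite !bits_cube_xor, xorb_nilpotent, xorb_nilpotent. simpl. lia.
Qed.

Lemma amalgam_embed_dist_01 v w : A0 v -> A1 w -> ham (amalgam_embed v) (amalgam_embed w) = dd v w.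
Proof.
  intros Hv Hw. unfold amalgam_embed. rewrite ham_pair, ham_g0, gate0_id, ham_cube_xor_self, ham_g1
    by assumption.
  rewrite (gate1_id w Hw), (gate1_id (pi0 w)) by now apply gate0_in_A1.
  rewrite (dist_sym Hdd v w), (gate0_dist w v Hv), (dist_sym Hdd (pi0 w) v). lia.
Qed.

Lemma amalgam_embed_dist v w : ham (amalgam_embed v) (amalgam_embed w) = dd v w.
Proof.
  destruct (Hcover v) as [Hv|Hv], (Hcover w) as [Hw|Hw].
  - unfold amalgam_embed. rewrite ham_pair, ham_g0, (gate0_id v), (gate0_id w) by assumption.
    rewrite (proj2 (ham_eq0 _ _)); [lia|]. intros j. now rewrite !bits_cube_xor, !xorb_nilpotent.
  - now apply amalgam_embed_dist_01.
  - rewrite (dist_sym hypercube_dist), (dist_sym Hdd). now apply amalgam_embed_dist_01.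
  - assert (E : dd v w = ham (g1 v) (g1 w)) by (rewrite ham_g1, !gate1_id; auto).
    assert (E' : dd (pi0 v) (pi0 w) = ham (g1 (pi0 v)) (g1 (pi0 w)))
      by (rewrite ham_g1, !gate1_id; auto using gate0_in_A1).
    unfold amalgam_embed. rewrite ham_pair, ham_g0, E, E'. symmetry.
    apply ham_add. intros j. rewrite !bits_cube_xor.
    destruct (g1_bit_cases j) as [Hc|Hc].
    + rewrite !Hc by assumption. destruct (bits (g1 v) j), (bits (g1 w) j); reflexivity.
    + rewrite (Hc (pi0 v) (pi0 w)) by (apply pi0_spec || now apply gate0_in_A1).
      destruct (bits (g1 v) j), (bits (g1 w) j), (bits (g1 (pi0 w)) j); reflexivity.
Qed.

Lemma amalgam_cube_embedding : cube_embedding G _ amalgam_embed.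
Proof.
  split; intros x y; rewrite amalgam_embed_dist; [apply (dist_walk Hdd) | apply (dist_le_walk Hdd)].
Qed.

Lemma gated_amalgam_ph_hom_partial_cube : ph_hom_partial_cube G.
Proof.
  pose proof (ph_le1_on_in_convex_part G A0 A0_convex (proj2 H0)) as Hph0.
  pose proof (ph_le1_on_in_convex_part G A1 A1_convex (proj2 H1)) as Hph1.
  split; [exact (cube_embedding_partial_cube _ _ _ amalgam_cube_embedding)|].
  apply ph_homogeneous_iff. intros S HS Hfin x C Sx HC z Hz.
  destruct (Hcover x) as [Ax|Ax].
  - exact (gated_cover_hull_Iset amalgam_cube_embedding A0 A1 pi0 pi1 o A0_convex A1_convex
             pi0_spec pi1_spec Ho0 Ho1 Hcover Hph0 Hph1 S C x z HS Hfin Sx Ax HC Hz).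
  - exact (gated_cover_hull_Iset amalgam_cube_embedding A1 A0 pi1 pi0 o A1_convex A0_convex
             pi1_spec pi0_spec Ho1 Ho0 (fun v => proj1 (or_comm (A0 v) (A1 v)) (Hcover v)) Hph1 Hph0
             S C x z HS Hfin Sx Ax HC Hz).
Qed.

End GatedAmalgam.

Theorem theorem3p21 :
  (* convex subgraphs *)
  (forall (G : Graph) (S : vset G),
      ph_hom_partial_cube G -> convex G S -> ph_hom_partial_cube (induced G S)) /\
  (* gated amalgams *)
  (forall G G0 G1 : Graph,
      ph_hom_partial_cube G0 -> ph_hom_partial_cube G1 ->
      gated_amalgam G G0 G1 -> ph_hom_partial_cube G) /\
  (* finite Cartesian products *)
  (forall (I : Type) (F : I -> Graph),
      finite_type I -> (forall i, ph_hom_partial_cube (F i)) ->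
      ph_hom_partial_cube (cart_prod I F)) /\
  (* weak Cartesian products of infinite families *)
  (forall (I : Type) (F : I -> Graph),
      ~ finite_type I -> (forall i, ph_hom_partial_cube (F i)) ->
      forall b : V (cart_prod I F), ph_hom_partial_cube (weak_prod I F b)).
Proof.
  split; [exact convex_subgraph_ph_hom_partial_cube|].
  split; [|split; [exact finite_prod_ph_hom_partial_cube|]].
  - intros G G0 G1 H0 H1 (A0 & A1 & HA0 & HA1 & (o & Ho0 & Ho1) & Hcover & Iso0 & Iso1).
    exact (gated_amalgam_ph_hom_partial_cube HA0 HA1 Ho0 Ho1 Hcover
             (graph_iso_ph_hom_partial_cube _ _ Iso0 H0) (graph_iso_ph_hom_partial_cube _ _ Iso1 H1)).
  - (* The weak product argument works for every index set. *)
    intros I F _ HF b. exact (weak_prod_ph_hom_partial_cube I F b HF).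
Qed.
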